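(* Let ${\bf u}:D_1\to\mathbb{C}^2$ be the map of the General Construction with $r_n=2^{-n+1}$ (so $r_1=1$), $p(n)=n$, and $F(n)=2^{n^2/2}$. Then ${\bf u}$ is smooth on $D_1$, vanishes to infinite order at the origin ($\|z^{-k}{\bf u}(z)\|\to 0$ as $z\to 0$ for every $k\ge 0$), ${\bf u}_z(z)\ne 0$ for $z\ne 0$, and there is a constant $C_1>0$ such that $$\frac{\|{\bf u}_{\bar z}(z)\|}{\|{\bf u}_z(z)\|}\le \frac{C_1}{-\log_2|z|}\quad\text{for all } z\in D_1\setminus\{0\}.$$
   Context: General Construction. Fix a smooth function $s:\mathbb{R}\to\mathbb{R}$ with $s\equiv 0$ on $[0,\tfrac14]$, $s$ increasing on $[\tfrac14,\tfrac34]$, $s(\tfrac12)=\tfrac12$, $s'(\tfrac12)=2$, $s''(\tfrac12)=0$, and $s\equiv 1$ on $[\tfrac34,1]$. Let $(r_n)_{n\ge 1}$ be a strictly decreasing sequence of positive reals with limit $0$, put $\Delta r_n=r_n-r_{n+1}$, let $D_{r_1}=\{|z|<r_1\}$, and let $A_n=\{z\in\mathbb{C}: r_{n+1}\le |z|\le r_n\}$. Define $\chi_n(z)=s\!\left(\frac{|z|-r_{n+1}}{\Delta r_n}\right)$ on $A_n$. Let $p(n)$ ($n\ge 0$) be an increasing sequence of nonnegative integers and $F(n)$ ($n\ge 0$) positive reals. Define ${\bf u}=(u^1,u^2):D_{r_1}\to\mathbb{C}^2$ by ${\bf u}(0)=(0,0)$ and, on $A_n$ with $n$ even, $u^1(z)=F(n)z^{p(n)}$,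 $u^2(z)=\chi_n(z)F(n-1)z^{p(n-1)}+(1-\chi_n(z))F(n+1)z^{p(n+1)}$; on $A_n$ with $n$ odd, the same formulas with the roles of $u^1$ and $u^2$ interchanged. ${\bf u}_z=(u^1_z,u^2_z)$, ${\bf u}_{\bar z}=(u^1_{\bar z},u^2_{\bar z})$ with $\partial_z=\frac12(\partial_x-i\partial_y)$, $\partial_{\bar z}=\frac12(\partial_x+i\partial_y)$; $\|\cdot\|$ is the Euclidean norm on $\mathbb{C}^2$. *)

From Stdlib Require Import Reals Lra.
Open Scope R_scope.

Definition Cx := (R * R)%type.
Definition C0 : Cx := (0, 0).
Definition Cadd (a b : Cx) : Cx := (fst a + fst b, snd a + snd b).
Definition Cmul (a b : Cx) : Cx :=
  (fst a * fst b - snd a * snd b, fst a * snd b + snd a * fst b).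
Definition Cscal (c : R) (a : Cx) : Cx := (c * fst a, c * snd a).
Fixpoint Cpow (a : Cx) (n : nat) : Cx :=
  match n with O => (1, 0) | S m => Cmul a (Cpow a m) end.
Definition Ci : Cx := (0, 1).
Definition Cnorm2 (a : Cx) : R := fst a ^ 2 + snd a ^ 2.
Definition C2norm (a b : Cx) : R := sqrt (Cnorm2 a + Cnorm2 b).

Definition Rnorm (x y : R) : R := sqrt (x ^ 2 + y ^ 2).

Definition cutoff (s : R -> R) : Prop :=
  exists d : nat -> R -> R,
    d O = s /\
    (forall n x, derivable_pt_lim (d n) x (d (S n) x)) /\
    (forall x, 0 <= x <= 1/4 -> s x = 0) /\
    (forall a b, 1/4 <= a -> a < b -> b <= 3/4 -> s a < s b) /\
    s (1/2) = 1/2 /\ d 1%nat (1/2) = 2 /\ d 2%nat (1/2) = 0 /\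
    (forall x, 3/4 <= x <= 1 -> s x = 1).

Definition chi (s : R -> R) (r : nat -> R) (n : nat) (x y : R) : R :=
  s ((Rnorm x y - r (S n)) / (r n - r (S n))).

Definition uA (s : R -> R) (r : nat -> R) (p : nat -> nat) (F : nat -> R)
    (n : nat) (x y : R) : Cx * Cx :=
  let z : Cx := (x, y) in
  let ch := chi s r n x y in
  let a := Cscal (F n) (Cpow z (p n)) in
  let b := Cadd (Cscal (ch * F (n - 1)%nat) (Cpow z (p (n - 1)%nat)))
                (Cscal ((1 - ch) * F (S n)) (Cpow z (p (S n)))) in
  if Nat.even n then (a, b) else (b, a).

Definition GC_map (s : R -> R) (r : nat -> R) (p : nat -> nat) (F : nat -> R)
    (u : R -> R -> Cx * Cx) : Prop :=
  u 0 0 = (C0, C0) /\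
  forall (n : nat) (x y : R), (1 <= n)%nat ->
    r (S n) <= Rnorm x y <= r n -> u x y = uA s r p F n x y.

Definition r4 (n : nat) : R := 2 / 2 ^ n.
Definition p4 (n : nat) : nat := n.
Definition F4 (n : nat) : R := Rpower 2 (INR n * INR n / 2).

Definition D1 (x y : R) : Prop := Rnorm x y < 1.

Definition cont2_at (f : R -> R -> R) (x y : R) : Prop :=
  forall eps, 0 < eps -> exists delta, 0 < delta /\
    forall x' y', Rnorm (x' - x) (y' - y) < delta -> Rabs (f x' y' - f x y) < eps.

Fixpoint Ck (k : nat) (U : R -> R -> Prop) (f : R -> R -> R) : Prop :=
  match k with
  | O => forall x y, U x y -> cont2_at f x y
  | S k' => (forall x y, U x y -> cont2_at f x y) /\
      exists fx fy : R -> R -> R,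
        (forall x y, U x y ->
           derivable_pt_lim (fun t => f t y) x (fx x y) /\
           derivable_pt_lim (fun t => f x t) y (fy x y)) /\
        Ck k' U fx /\ Ck k' U fy
  end.

Definition smooth2 (U : R -> R -> Prop) (f : R -> R -> R) : Prop :=
  forall k, Ck k U f.

Definition smooth_map (U : R -> R -> Prop) (u : R -> R -> Cx * Cx) : Prop :=
  smooth2 U (fun x y => fst (fst (u x y))) /\
  smooth2 U (fun x y => snd (fst (u x y))) /\
  smooth2 U (fun x y => fst (snd (u x y))) /\
  smooth2 U (fun x y => snd (snd (u x y))).

Definition has_dx (f : R -> R -> Cx) (x y : R) (l : Cx) : Prop :=
  derivable_pt_lim (fun t => fst (f t y)) x (fst l) /\
  derivable_pt_lim (fun t => snd (f t y)) x (snd l).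
Definition has_dy (f : R -> R -> Cx) (x y : R) (l : Cx) : Prop :=
  derivable_pt_lim (fun t => fst (f x t)) y (fst l) /\
  derivable_pt_lim (fun t => snd (f x t)) y (snd l).

Definition Wz (fx fy : Cx) : Cx := Cscal (1/2) (Cadd fx (Cscal (-1) (Cmul Ci fy))).
Definition Wzbar (fx fy : Cx) : Cx := Cscal (1/2) (Cadd fx (Cmul Ci fy)).

Definition u1 (u : R -> R -> Cx * Cx) : R -> R -> Cx := fun x y => fst (u x y).
Definition u2 (u : R -> R -> Cx * Cx) : R -> R -> Cx := fun x y => snd (u x y).

Definition vanishes_inf_order (u : R -> R -> Cx * Cx) : Prop :=
  forall k : nat, forall eps, 0 < eps -> exists delta, 0 < delta /\
    forall x y, D1 x y -> 0 < Rnorm x y < delta ->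
      C2norm (fst (u x y)) (snd (u x y)) / (Rnorm x y) ^ k < eps.

From Stdlib Require Import Reals Lra Lia Psatz ClassicalEpsilon ZArith.
Open Scope R_scope.

(* On the annulus [2^-n <= |z| <= 2^(1-n)], and on a neighbourhood of it reaching into the
   gluing zones, u is given by one formula: a holomorphic block F(n) z^n and a block blending
   F(n-1) z^(n-1) with F(n+1) z^(n+1) through the cutoff evaluated at 2^n |z| - 1.  There
   F(n) |z|^n ~ 2^(-n^2/2), while each partial derivative of such an expression (a polynomial in
   x, y, 1/|z|, 2^n and derivatives of the cutoff) costs at most a factor 2^O(n).  So every
   derivative of u is o(|z|^k) for all k, which gives smoothness at the origin (coinductively,
   one derivative at a time) and vanishing to infinite order.
   For the quotient: on the n-th annulus the holomorphic block has |d/dz| = n F(n) |z|^(n-1),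
   whereas d/dzbar only sees the gradient of the cutoff, of size ~2^n, against
   F(n-1) z^(n-1) - F(n+1) z^(n+1); since 2^n F(n-1) = sqrt 2 F(n) and 2^n F(n+1) |z|^2 = O(F(n)),
   the quotient is O(1/n) = O(1 / -log2 |z|). *)

(** * Planar norm and complex powers *)

Lemma Rnorm_nonneg x y : 0 <= Rnorm x y.
Proof. apply sqrt_pos. Qed.

Lemma Rnorm_sqr x y : Rnorm x y * Rnorm x y = x ^ 2 + y ^ 2.
Proof. unfold Rnorm; rewrite sqrt_sqrt; nra. Qed.

Lemma Rnorm_sym x y : Rnorm x y = Rnorm y x.
Proof. unfold Rnorm; f_equal; ring. Qed.

Lemma Rabs_le_Rnorm x y : Rabs x <= Rnorm x y.
Proof.
  apply Rsqr_incr_0_var; [|apply Rnorm_nonneg].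
  rewrite <- Rsqr_abs; unfold Rsqr; rewrite Rnorm_sqr; nra.
Qed.

Lemma Rnorm_r0 x : Rnorm x 0 = Rabs x.
Proof.
  unfold Rnorm; replace (x ^ 2 + 0 ^ 2) with (Rsqr x) by (unfold Rsqr; ring).
  apply sqrt_Rsqr_abs.
Qed.

Lemma Rnorm_0l y : Rnorm 0 y = Rabs y.
Proof. rewrite Rnorm_sym; apply Rnorm_r0. Qed.

Lemma Rnorm_le_Rabs_add x y : Rnorm x y <= Rabs x + Rabs y.
Proof.
  pose proof (Rabs_pos x); pose proof (Rabs_pos y).
  apply Rsqr_incr_0_var; [|lra]; unfold Rsqr; rewrite Rnorm_sqr.
  rewrite <- (pow2_abs x), <- (pow2_abs y); nra.
Qed.

Lemma Rnorm_triangle a b c d : Rnorm (a + c) (b + d) <= Rnorm a b + Rnorm c d.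
Proof.
  pose proof (Rnorm_sqr a b); pose proof (Rnorm_sqr c d); pose proof (Rnorm_sqr (a + c) (b + d)).
  pose proof (Rnorm_nonneg a b); pose proof (Rnorm_nonneg c d).
  assert (Hcs : a * c + b * d <= Rnorm a b * Rnorm c d).
  { destruct (Rle_dec (a * c + b * d) 0); [nra|].
    apply Rsqr_incr_0_var; [unfold Rsqr|nra].
    pose proof (pow2_ge_0 (a * d - b * c)); nra. }
  apply Rsqr_incr_0_var; [unfold Rsqr|lra]; nra.
Qed.

Lemma Rnorm_Rabs_sub x y x' y' : Rabs (Rnorm x' y' - Rnorm x y) <= Rnorm (x' - x) (y' - y).
Proof.
  pose proof (Rnorm_triangle (x' - x) (y' - y) x y) as H1.
  pose proof (Rnorm_triangle (x - x') (y - y') x' y') as H2.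
  replace (x' - x + x) with x' in H1 by ring; replace (y' - y + y) with y' in H1 by ring.
  replace (x - x' + x') with x in H2 by ring; replace (y - y' + y') with y in H2 by ring.
  replace (Rnorm (x - x') (y - y')) with (Rnorm (x' - x) (y' - y)) in H2
    by (unfold Rnorm; f_equal; ring).
  apply Rabs_le; lra.
Qed.

Lemma Rnorm_eq0 x y : Rnorm x y = 0 -> x = 0 /\ y = 0.
Proof.
  intro H; pose proof (Rnorm_sqr x y) as Hs; rewrite H in Hs; split; nra.
Qed.

Lemma Rnorm_00 : Rnorm 0 0 = 0.
Proof. rewrite Rnorm_r0; apply Rabs_R0. Qed.

Lemma Rnorm_sub_diag x y : Rnorm (x - x) (y - y) = 0.
Proof. rewrite !Rminus_diag; apply Rnorm_00. Qed.

Lemma Cnorm2_nonneg a : 0 <= Cnorm2 a.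
Proof. unfold Cnorm2; nra. Qed.

Lemma Cnorm2_pair x y : Cnorm2 (x, y) = Rnorm x y ^ 2.
Proof. unfold Cnorm2; cbn [fst snd]; rewrite <- Rnorm_sqr; ring. Qed.

Lemma Cnorm2_mul a b : Cnorm2 (Cmul a b) = Cnorm2 a * Cnorm2 b.
Proof. unfold Cnorm2, Cmul; cbn [fst snd]; ring. Qed.

Lemma Cnorm2_pow z p : Cnorm2 (Cpow z p) = Cnorm2 z ^ p.
Proof.
  induction p as [|p IH]; cbn [Cpow pow]; [unfold Cnorm2; cbn; ring|].
  rewrite Cnorm2_mul, IH; ring.
Qed.

Lemma Cnorm2_scal c a : Cnorm2 (Cscal c a) = c ^ 2 * Cnorm2 a.
Proof. unfold Cnorm2, Cscal; cbn [fst snd]; ring. Qed.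

Lemma sqrt_Cnorm2_pow x y p : sqrt (Cnorm2 (Cpow (x, y) p)) = Rnorm x y ^ p.
Proof.
  rewrite Cnorm2_pow, Cnorm2_pair, <- pow_mult, Nat.mul_comm, pow_mult.
  apply sqrt_pow2, pow_le, Rnorm_nonneg.
Qed.

Lemma sqrt_Cnorm2_scal c a : sqrt (Cnorm2 (Cscal c a)) = Rabs c * sqrt (Cnorm2 a).
Proof.
  rewrite Cnorm2_scal, sqrt_mult_alt by apply pow2_ge_0.
  rewrite <- pow2_abs, sqrt_pow2 by apply Rabs_pos; reflexivity.
Qed.

Lemma sqrt_Cnorm2_mul a b : sqrt (Cnorm2 (Cmul a b)) = sqrt (Cnorm2 a) * sqrt (Cnorm2 b).
Proof. rewrite Cnorm2_mul; apply sqrt_mult_alt, Cnorm2_nonneg. Qed.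

Lemma sqrt_Cnorm2_add a b : sqrt (Cnorm2 (Cadd a b)) <= sqrt (Cnorm2 a) + sqrt (Cnorm2 b).
Proof. apply (Rnorm_triangle (fst a) (snd a) (fst b) (snd b)). Qed.

Lemma C2norm_comm a b : C2norm a b = C2norm b a.
Proof. unfold C2norm; f_equal; ring. Qed.

Lemma C2norm_le_Rabs a b :
  C2norm a b <= Rabs (fst a) + Rabs (snd a) + Rabs (fst b) + Rabs (snd b).
Proof.
  pose proof (Rabs_pos (fst a)); pose proof (Rabs_pos (snd a)).
  pose proof (Rabs_pos (fst b)); pose proof (Rabs_pos (snd b)).
  unfold C2norm, Cnorm2; rewrite <- sqrt_pow2 by lra; apply sqrt_le_1_alt.
  rewrite <- (pow2_abs (fst a)), <- (pow2_abs (snd a)), <- (pow2_abs (fst b)),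
    <- (pow2_abs (snd b)); nra.
Qed.

Definition cp (re : bool) (z : Cx) : R := if re then fst z else snd z.

Lemma cp_scal re c z : cp re (Cscal c z) = c * cp re z.
Proof. destruct re; reflexivity. Qed.

Lemma cp_add re a b : cp re (Cadd a b) = cp re a + cp re b.
Proof. destruct re; reflexivity. Qed.

Lemma Rabs_cp_le re a : Rabs (cp re a) <= sqrt (Cnorm2 a).
Proof.
  destruct re; cbn [cp]; [apply Rabs_le_Rnorm|].
  unfold Cnorm2; rewrite Rplus_comm; apply Rabs_le_Rnorm.
Qed.

Lemma Rabs_cp_Cpow_le re x y p : Rabs (cp re (Cpow (x, y) p)) <= Rnorm x y ^ p.
Proof. rewrite <- sqrt_Cnorm2_pow; apply Rabs_cp_le. Qed.

(** * Partial derivatives *)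

Lemma derivable_pt_lim_eq f x l l' : derivable_pt_lim f x l -> l = l' -> derivable_pt_lim f x l'.
Proof. intros H ->; exact H. Qed.

Lemma derivable_pt_lim_cst_fun f x c : (forall t, f t = c) -> derivable_pt_lim f x 0.
Proof.
  intro H; apply (derivable_pt_lim_ext (fct_cte c)); [intro; rewrite H; reflexivity|].
  apply derivable_pt_lim_const.
Qed.

Lemma derivable_pt_lim_near f g x l e : 0 < e -> (forall t, Rabs (t - x) < e -> f t = g t) ->
  derivable_pt_lim f x l -> derivable_pt_lim g x l.
Proof.
  intros He H Hf; apply (derivable_pt_lim_locally_ext f g x (x - e) (x + e)); auto; [lra|].
  intros t Ht; apply H, Rabs_def1; lra.
Qed.

Lemma derivable_pt_lim_unique_near f g x l1 l2 e : 0 < e ->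
  (forall t, Rabs (t - x) < e -> f t = g t) ->
  derivable_pt_lim f x l1 -> derivable_pt_lim g x l2 -> l1 = l2.
Proof. intros. eapply uniqueness_limite; [eapply derivable_pt_lim_near|]; eauto. Qed.

Lemma derivable_pt_lim_inv f x l : derivable_pt_lim f x l -> f x <> 0 ->
  derivable_pt_lim (fun t => / f t) x (- l / (f x * f x)).
Proof.
  intros Hf Hn; eapply derivable_pt_lim_ext; [|eapply derivable_pt_lim_eq].
  2: apply (derivable_pt_lim_div (fct_cte 1) f x 0 l); auto; apply derivable_pt_lim_const.
  - intro; unfold fct_cte, div_fct, Rdiv; ring.
  - unfold fct_cte, Rsqr; field; auto.
Qed.

Lemma derivable_pt_lim_Rnorm_x x y : 0 < Rnorm x y ->
  derivable_pt_lim (fun t => Rnorm t y) x (x / Rnorm x y).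
Proof.
  intro Hp; assert (Hs : 0 < x ^ 2 + y ^ 2) by (rewrite <- Rnorm_sqr; nra).
  eapply derivable_pt_lim_eq.
  - apply (derivable_pt_lim_comp (fun t => t ^ 2 + y ^ 2) sqrt); [|apply derivable_pt_lim_sqrt; lra].
    apply (derivable_pt_lim_plus (fun t => t ^ 2) (fun _ => y ^ 2)).
    + apply derivable_pt_lim_pow.
    + apply (derivable_pt_lim_cst_fun _ _ (y ^ 2)); auto.
  - unfold Rnorm; simpl; field; apply Rgt_not_eq, sqrt_lt_R0; nra.
Qed.

Lemma derivable_pt_lim_Rnorm_y x y : 0 < Rnorm x y ->
  derivable_pt_lim (fun t => Rnorm x t) y (y / Rnorm x y).
Proof.
  intro Hp; rewrite Rnorm_sym in Hp |- *.
  apply (derivable_pt_lim_ext (fun t => Rnorm t x)); [intro; apply Rnorm_sym|].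
  now apply derivable_pt_lim_Rnorm_x.
Qed.

Lemma has_dy_swap f x y l : has_dx (fun a b => f b a) y x l -> has_dy f x y l.
Proof. exact (fun H => H). Qed.

Lemma has_dx_eq f x y l l' : has_dx f x y l -> l = l' -> has_dx f x y l'.
Proof. intros H ->; exact H. Qed.

Lemma has_dx_add f g x y a b : has_dx f x y a -> has_dx g x y b ->
  has_dx (fun s t => Cadd (f s t) (g s t)) x y (Cadd a b).
Proof.
  intros [Hf1 Hf2] [Hg1 Hg2]; split.
  - apply (derivable_pt_lim_plus (fun t => fst (f t y)) (fun t => fst (g t y))); auto.
  - apply (derivable_pt_lim_plus (fun t => snd (f t y)) (fun t => snd (g t y))); auto.
Qed.

Lemma has_dx_mul f g x y a b : has_dx f x y a -> has_dx g x y b ->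
  has_dx (fun s t => Cmul (f s t) (g s t)) x y (Cadd (Cmul a (g x y)) (Cmul (f x y) b)).
Proof.
  intros [Hf1 Hf2] [Hg1 Hg2]; unfold Cmul; split; cbn [fst snd]; eapply derivable_pt_lim_eq.
  - apply (derivable_pt_lim_minus (fun t => fst (f t y) * fst (g t y))
                                  (fun t => snd (f t y) * snd (g t y)));
      apply (derivable_pt_lim_mult (fun t => _ (f t y)) (fun t => _ (g t y))); eauto.
  - cbn; ring.
  - apply (derivable_pt_lim_plus (fun t => fst (f t y) * snd (g t y))
                                 (fun t => snd (f t y) * fst (g t y)));
      apply (derivable_pt_lim_mult (fun t => _ (f t y)) (fun t => _ (g t y))); eauto.
  - cbn; ring.
Qed.

Lemma has_dx_rscal h f x y hx a : derivable_pt_lim (fun t => h t y) x hx -> has_dx f x y a ->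
  has_dx (fun s t => Cscal (h s t) (f s t)) x y (Cadd (Cscal hx (f x y)) (Cscal (h x y) a)).
Proof.
  intros Hh [Hf1 Hf2]; unfold Cscal; split; cbn [fst snd].
  - apply (derivable_pt_lim_mult (fun t => h t y) (fun t => fst (f t y))); auto.
  - apply (derivable_pt_lim_mult (fun t => h t y) (fun t => snd (f t y))); auto.
Qed.

Lemma has_dx_unique_near f g x y l1 l2 e : 0 < e ->
  (forall t, Rabs (t - x) < e -> f t y = g t y) ->
  has_dx f x y l1 -> has_dx g x y l2 -> l1 = l2.
Proof.
  intros He Hfg [H1 H2] [H3 H4]; destruct l1, l2; f_equal.
  - apply (derivable_pt_lim_unique_near (fun t => fst (f t y)) (fun t => fst (g t y)) x _ _ e);
      auto; intros t Ht; rewrite Hfg; auto.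
  - apply (derivable_pt_lim_unique_near (fun t => snd (f t y)) (fun t => snd (g t y)) x _ _ e);
      auto; intros t Ht; rewrite Hfg; auto.
Qed.

Lemma has_dy_unique_near f g x y l1 l2 e : 0 < e ->
  (forall t, Rabs (t - y) < e -> f x t = g x t) ->
  has_dy f x y l1 -> has_dy g x y l2 -> l1 = l2.
Proof. intros He H; apply (has_dx_unique_near (fun a b => f b a) (fun a b => g b a) y x _ _ e He H). Qed.

Lemma has_partials_unique_ball f g x y e ax ay bx b_y : 0 < e ->
  (forall a b, Rnorm (a - x) (b - y) < e -> f a b = g a b) ->
  has_dx f x y ax -> has_dy f x y ay -> has_dx g x y bx -> has_dy g x y b_y -> ax = bx /\ ay = b_y.
Proof.
  intros He H Hfx Hfy Hgx Hgy; split.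
  - apply (has_dx_unique_near f g x y _ _ e); auto; intros t Ht; apply H.
    rewrite Rminus_diag, Rnorm_r0; auto.
  - apply (has_dy_unique_near f g x y _ _ e); auto; intros t Ht; apply H.
    rewrite Rminus_diag, Rnorm_0l; auto.
Qed.

Lemma has_dy_add f g x y a b : has_dy f x y a -> has_dy g x y b ->
  has_dy (fun s t => Cadd (f s t) (g s t)) x y (Cadd a b).
Proof. apply (has_dx_add (fun a b => f b a) (fun a b => g b a) y x). Qed.

Lemma has_dy_rscal h f x y hy a : derivable_pt_lim (fun t => h x t) y hy -> has_dy f x y a ->
  has_dy (fun s t => Cscal (h s t) (f s t)) x y (Cadd (Cscal hy (f x y)) (Cscal (h x y) a)).
Proof. apply (has_dx_rscal (fun a b => h b a) (fun a b => f b a) y x). Qed.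

Lemma has_dx_Cpow x y p :
  has_dx (fun a b => Cpow (a, b) p) x y (Cscal (INR p) (Cpow (x, y) (p - 1))).
Proof.
  induction p as [|p IH].
  - split; (eapply derivable_pt_lim_eq; [eapply derivable_pt_lim_cst_fun; intro; cbn; reflexivity|]);
      cbn; ring.
  - eapply has_dx_eq; [apply (has_dx_mul (fun a b => (a, b)) (fun a b => Cpow (a, b) p) _ _ (1, 0));
      [split; [apply derivable_pt_lim_id|apply (derivable_pt_lim_cst_fun _ _ y); auto]|exact IH]|].
    replace (S p - 1)%nat with p by lia; rewrite S_INR.
    destruct p as [|q]; [cbn; unfold Cadd, Cmul, Cscal; cbn; f_equal; ring|].
    replace (S q - 1)%nat with q by lia; cbn [Cpow].
    destruct (Cpow (x, y) q); unfold Cadd, Cmul, Cscal; cbn; f_equal; ring.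
Qed.

Lemma has_dy_Cpow x y p :
  has_dy (fun a b => Cpow (a, b) p) x y (Cmul Ci (Cscal (INR p) (Cpow (x, y) (p - 1)))).
Proof.
  induction p as [|p IH].
  - split; (eapply derivable_pt_lim_eq; [eapply derivable_pt_lim_cst_fun; intro; cbn; reflexivity|]);
      cbn; ring.
  - apply has_dy_swap; eapply has_dx_eq;
      [apply (has_dx_mul (fun b a => (a, b)) (fun b a => Cpow (a, b) p) _ _ (0, 1));
      [split; [apply (derivable_pt_lim_cst_fun _ _ x); auto|apply derivable_pt_lim_id]|exact IH]|].
    replace (S p - 1)%nat with p by lia; rewrite S_INR.
    destruct p as [|q]; [cbn; unfold Cadd, Cmul, Cscal, Ci; cbn; f_equal; ring|].
    replace (S q - 1)%nat with q by lia; cbn [Cpow].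
    destruct (Cpow (x, y) q); unfold Cadd, Cmul, Cscal, Ci; cbn; f_equal; ring.
Qed.

Lemma Cpow_partial_x re x y p : derivable_pt_lim (fun t => cp re (Cpow (t, y) p)) x
  (INR p * cp re (Cpow (x, y) (p - 1))).
Proof. destruct (has_dx_Cpow x y p); destruct re; assumption. Qed.

Lemma Cpow_partial_y re x y p : derivable_pt_lim (fun t => cp re (Cpow (x, t) p)) y
  ((if re then - INR p else INR p) * cp (negb re) (Cpow (x, y) (p - 1))).
Proof.
  destruct (has_dy_Cpow x y p) as [H1 H2]; destruct re; eapply derivable_pt_lim_eq;
    try eassumption; unfold Cmul, Cscal, Ci; cbn; ring.
Qed.

Lemma Rabs_sub_le_between a b c : Rmin a b <= c <= Rmax a b -> Rabs (c - a) <= Rabs (b - a).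
Proof.
  unfold Rmin, Rmax; destruct (Rle_dec a b); intro.
  - rewrite (Rabs_right (c - a)), (Rabs_right (b - a)); lra.
  - rewrite (Rabs_left1 (c - a)), (Rabs_left1 (b - a)); lra.
Qed.

Lemma MVT_Rabs_le f f' a b M :
  (forall c, Rmin a b <= c <= Rmax a b -> derivable_pt_lim f c (f' c)) ->
  (forall c, Rmin a b <= c <= Rmax a b -> Rabs (f' c) <= M) ->
  Rabs (f b - f a) <= M * Rabs (b - a).
Proof.
  intros Hd Hb.
  assert (Hab : forall a b, a < b ->
    (forall c, a <= c <= b -> derivable_pt_lim f c (f' c)) ->
    (forall c, a <= c <= b -> Rabs (f' c) <= M) -> Rabs (f b - f a) <= M * Rabs (b - a)).
  { clear; intros a b Hab Hd Hb; destruct (MVT_cor2 f f' a b Hab Hd) as [c [-> Hc]].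
    rewrite Rabs_mult; apply Rmult_le_compat_r; [apply Rabs_pos|apply Hb; lra]. }
  unfold Rmin, Rmax in *; destruct (Rtotal_order a b) as [Hlt|[<-|Hgt]].
  - destruct (Rle_dec a b); [|lra]; apply Hab; auto.
  - rewrite !Rminus_diag, Rabs_R0; lra.
  - rewrite <- Rabs_Ropp, <- (Rabs_Ropp (b - a)), !Ropp_minus_distr.
    destruct (Rle_dec a b); [lra|]; apply Hab; auto.
Qed.

Lemma cont2_at_of_bounded_partials (G gx gy : R -> R -> R) x y e M : 0 < e ->
  (forall a b, Rnorm (a - x) (b - y) < e ->
     derivable_pt_lim (fun t => G t b) a (gx a b) /\
     derivable_pt_lim (fun t => G a t) b (gy a b) /\
     Rabs (gx a b) <= M /\ Rabs (gy a b) <= M) ->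
  cont2_at G x y.
Proof.
  intros He H eps Heps.
  assert (HM : 0 <= M).
  { destruct (H x y) as [_ [_ [HM _]]]; [rewrite Rnorm_sub_diag; lra|].
    pose proof (Rabs_pos (gx x y)); lra. }
  set (del := Rmin (e / 4) (eps / (2 * (M + 1)))).
  assert (Hdel1 : del <= e / 4) by apply Rmin_l.
  assert (Hdel2 : del * (2 * (M + 1)) <= eps).
  { pose proof (Rmin_r (e / 4) (eps / (2 * (M + 1)))).
    apply (Rmult_le_compat_r (2 * (M + 1))) in H0; [|lra]; fold del in H0.
    replace (eps / (2 * (M + 1)) * (2 * (M + 1))) with eps in H0 by (field; lra); lra. }
  exists del; split; [apply Rmin_pos; [lra|apply Rdiv_lt_0_compat; lra]|].
  intros x' y' Hn; pose proof (Rnorm_nonneg (x' - x) (y' - y)).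
  pose proof (Rabs_le_Rnorm (x' - x) (y' - y)) as Hx.
  pose proof (Rabs_le_Rnorm (y' - y) (x' - x)) as Hy; rewrite Rnorm_sym in Hy.
  assert (Hin : forall a b, Rabs (a - x) <= del -> Rabs (b - y) <= del ->
            Rnorm (a - x) (b - y) < e).
  { intros a b Ha Hb; eapply Rle_lt_trans; [apply Rnorm_le_Rabs_add|lra]. }
  assert (HA1 : Rabs (G x' y' - G x y') <= M * Rabs (x' - x)).
  { apply (MVT_Rabs_le (fun t => G t y') (fun t => gx t y')); intros c Hc;
      pose proof (Rabs_sub_le_between x x' c Hc); apply (H c y'), Hin; lra. }
  assert (HA2 : Rabs (G x y' - G x y) <= M * Rabs (y' - y)).
  { apply (MVT_Rabs_le (fun t => G x t) (fun t => gy x t)); intros c Hc;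
      pose proof (Rabs_sub_le_between y y' c Hc); apply (H x c), Hin;
      rewrite ?Rminus_diag, ?Rabs_R0; lra. }
  replace (G x' y' - G x y) with ((G x' y' - G x y') + (G x y' - G x y)) by ring.
  eapply Rle_lt_trans; [apply Rabs_triang|]; nra.
Qed.

(** * Powers of two and the weights F4 *)

Lemma pow2_pos m : 0 < 2 ^ m.
Proof. apply pow_lt; lra. Qed.

Lemma pow2_ge1 m : 1 <= 2 ^ m.
Proof. apply pow_R1_Rle; lra. Qed.

Lemma pow2_le a b : (a <= b)%nat -> 2 ^ a <= 2 ^ b.
Proof. intro; apply Rle_pow; auto; lra. Qed.

Lemma pow2_Rpower m : 2 ^ m = Rpower 2 (INR m).
Proof. rewrite Rpower_pow; auto; lra. Qed.

Lemma pow2_mul_add m1 m2 n : 2 ^ ((m1 + m2) * n) = 2 ^ (m1 * n) * 2 ^ (m2 * n).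
Proof. rewrite Nat.mul_add_distr_r; apply pow_add. Qed.

Lemma INR_succ_le_pow2 n : INR n + 1 <= 2 ^ n.
Proof. induction n; [simpl; lra|]; rewrite S_INR; simpl; pose proof (pos_INR n); lra. Qed.

Lemma INR_le_pow2 n : INR n <= 2 ^ n.
Proof. pose proof (INR_succ_le_pow2 n); lra. Qed.

Lemma Rpower2_pow a p : Rpower 2 a ^ p = Rpower 2 (a * INR p).
Proof. rewrite <- Rpower_pow by apply exp_pos; apply Rpower_mult. Qed.

Lemma F4_pos n : 0 < F4 n.
Proof. apply exp_pos. Qed.

Lemma F4_pred n : (1 <= n)%nat -> 2 ^ n * F4 (n - 1) = F4 n * Rpower 2 (1 / 2).
Proof.
  intro Hn; unfold F4; rewrite pow2_Rpower, <- !Rpower_plus; f_equal.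
  rewrite minus_INR by lia; simpl; field.
Qed.

Lemma F4_succ n : F4 (S n) / 2 ^ n = F4 n * Rpower 2 (1 / 2).
Proof.
  unfold F4, Rdiv; rewrite pow2_Rpower, <- Rpower_Ropp, <- !Rpower_plus; f_equal.
  rewrite S_INR; field.
Qed.

Lemma Rpower2_half_le : Rpower 2 (1 / 2) <= 2.
Proof.
  assert (H : Rpower 2 1 = 2) by (apply Rpower_1; lra).
  pattern 2 at 3; rewrite <- H; apply Rle_Rpower; lra.
Qed.

(** [2^(-n^2/2)]: on the [n]-th annulus [|z| ~ 2^-n], [F4 n |z|^n] has this size. *)
Definition gauss (n : nat) : R := Rpower 2 (- (INR n * INR n) / 2).

Lemma gauss_pos n : 0 < gauss n.
Proof. apply exp_pos. Qed.

Lemma F4_mul_pow_le n j k : (1 <= n)%nat -> (k <= n + j - 1)%nat ->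
  F4 (n + j - 1) * (5 / 2 / 2 ^ n) ^ (n + j - 1 - k) <= 2 ^ (j * j + 2 * j) * 2 ^ ((k + 2) * n) * gauss n.
Proof.
  intros Hn Hk.
  assert (HN : INR (n + j - 1) = INR n + INR j - 1).
  { destruct n as [|m]; [lia|]; replace (S m + j - 1)%nat with (m + j)%nat by lia.
    rewrite plus_INR, S_INR; ring. }
  assert (Hp : INR (n + j - 1 - k) = INR n + INR j - 1 - INR k) by (rewrite minus_INR by lia; lra).
  assert (H4 : 5 / 2 / 2 ^ n <= Rpower 2 (2 - INR n)).
  { replace 2 with (INR 2) at 4 by (simpl; ring).
    unfold Rminus; rewrite Rpower_plus, Rpower_Ropp, <- !pow2_Rpower.
    pose proof (pow2_pos n); unfold Rdiv; simpl.
    apply Rmult_le_compat_r; [left; apply Rinv_0_lt_compat|]; lra. }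
  assert (H5 : 0 <= 5 / 2 / 2 ^ n) by (pose proof (pow2_pos n); apply Rlt_le, Rdiv_lt_0_compat; lra).
  eapply Rle_trans; [apply Rmult_le_compat_l; [left; apply F4_pos|apply pow_incr; split; eauto]|].
  rewrite Rpower2_pow; unfold F4, gauss; rewrite <- Rpower_plus, !pow2_Rpower, <- !Rpower_plus.
  apply Rle_Rpower; [lra|].
  rewrite HN, Hp, !plus_INR, !mult_INR, plus_INR; simpl INR.
  assert (1 <= INR n) by (apply (le_INR 1); lia).
  assert (INR k <= INR n + INR j - 1) by (rewrite <- HN; apply le_INR; lia).
  pose proof (pos_INR j); pose proof (pos_INR k); nra.
Qed.

Lemma gauss_decay A m eps : 0 < eps ->
  exists N, forall n, (N <= n)%nat -> A * 2 ^ (m * n) * gauss n <= eps.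
Proof.
  intro He; destruct (archimed (Rabs A / eps)) as [Ha _].
  set (N0 := Z.to_nat (up (Rabs A / eps))).
  exists (Nat.max (2 * m + 2) N0); intros n Hn.
  assert (HA : A * 2 ^ (m * n) * gauss n <= Rabs A * / 2 ^ n).
  { rewrite Rmult_assoc; eapply Rle_trans.
    - apply Rmult_le_compat_r; [|apply Rle_abs].
      pose proof (pow2_pos (m * n)); pose proof (gauss_pos n); nra.
    - apply Rmult_le_compat_l; [apply Rabs_pos|].
      rewrite !pow2_Rpower, <- Rpower_Ropp; unfold gauss; rewrite <- Rpower_plus.
      apply Rle_Rpower; [lra|]; rewrite mult_INR.
      assert (INR (2 * m + 2) <= INR n) by (apply le_INR; lia).
      rewrite plus_INR, mult_INR in H; simpl in H; pose proof (pos_INR m); nra. }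
  eapply Rle_trans; [exact HA|].
  assert (Habs : Rabs A / eps <= INR n).
  { apply (Rle_trans _ (INR N0)); [|apply le_INR; lia].
    unfold N0; rewrite INR_IZR_INZ, Z2Nat.id; [lra|]; apply le_IZR.
    pose proof (Rabs_pos A).
    assert (0 <= Rabs A / eps) by (apply Rmult_le_pos; [auto|left; apply Rinv_0_lt_compat; auto]).
    lra. }
  pose proof (INR_le_pow2 n); pose proof (pow2_pos n).
  apply (Rmult_le_reg_r (2 ^ n)); auto; rewrite Rmult_assoc, Rinv_l by lra.
  apply (Rmult_le_compat_r eps) in Habs; [|lra]; unfold Rdiv in Habs.
  rewrite Rmult_assoc, Rinv_l, Rmult_1_r in Habs by lra; nra.
Qed.

Lemma r4_S n : r4 (S n) = 1 / 2 ^ n.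
Proof. unfold r4; simpl; field; apply Rgt_not_eq, pow2_pos. Qed.

Lemma r4_annulus_index a : 0 < a <= 1 -> exists n, (1 <= n)%nat /\ r4 (S n) < a <= r4 n.
Proof.
  intros [Ha1 Ha2]; destruct (archimed (2 / a)) as [HN _].
  set (N := Z.to_nat (up (2 / a))).
  assert (HN' : 2 / a <= INR N).
  { unfold N; rewrite INR_IZR_INZ, Z2Nat.id; [lra|]; apply le_IZR.
    assert (0 < 2 / a) by (apply Rdiv_lt_0_compat; lra); lra. }
  assert (HrN : r4 N < a).
  { unfold r4; pose proof (INR_succ_le_pow2 N); pose proof (pow2_pos N).
    apply (Rmult_lt_reg_r (2 ^ N)); auto; unfold Rdiv; rewrite Rmult_assoc, Rinv_l by lra.
    apply (Rmult_le_compat_l a) in HN'; [|lra]; unfold Rdiv in HN'.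
    replace (a * (2 * / a)) with 2 in HN' by (field; lra); nra. }
  assert (Hdesc : forall k, r4 (S k) < a -> exists n, (1 <= n)%nat /\ r4 (S n) < a <= r4 n).
  { induction k as [|k IH]; intro Hk; [unfold r4 in Hk; simpl in Hk; lra|].
    destruct (Rle_lt_dec a (r4 (S k))); [exists (S k); split; [lia|auto]|auto]. }
  destruct N as [|N']; [unfold r4 in HrN; simpl in HrN; lra|exact (Hdesc N' HrN)].
Qed.

Lemma neg_log2_bounds n N : 3 / 4 / 2 ^ n < N -> N < 1 -> 0 < - (ln N / ln 2) < INR n + 1.
Proof.
  intros H1 H2; pose proof (pow2_pos n); pose proof ln_lt_2.
  assert (HN : 0 < N) by (assert (0 < 3 / 4 / 2 ^ n) by (apply Rdiv_lt_0_compat; lra); lra).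
  assert (Hl0 : ln N < 0) by (rewrite <- ln_1; apply ln_increasing; auto).
  assert (Hl1 : ln (/ 2 ^ S n) < ln N).
  { apply ln_increasing; [apply Rinv_0_lt_compat, pow2_pos|].
    simpl; rewrite Rinv_mult; apply (Rlt_trans _ (3 / 4 / 2 ^ n)); auto; unfold Rdiv.
    apply Rmult_lt_compat_r; [apply Rinv_0_lt_compat; auto|lra]. }
  rewrite ln_Rinv, ln_pow, S_INR in Hl1 by (try apply pow2_pos; lra).
  split.
  - unfold Rdiv; assert (0 < / ln 2) by (apply Rinv_0_lt_compat; lra); nra.
  - apply (Rmult_lt_reg_r (ln 2)); [lra|]; unfold Rdiv.
    replace (- (ln N * / ln 2) * ln 2) with (- ln N) by (field; lra); lra.
Qed.

Lemma derivable_pt_lim_const_interval f f' a b c :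
  (forall x, derivable_pt_lim f x (f' x)) -> (forall x, a < x < b -> f x = c) ->
  forall x, a < x < b -> f' x = 0.
Proof.
  intros Hf Hc x Hx.
  apply (derivable_pt_lim_unique_near f (fun _ => c) x (f' x) 0 (Rmin (x - a) (b - x)));
    [apply Rmin_pos; lra| |auto|apply (derivable_pt_lim_cst_fun _ _ c); auto].
  intros t Ht; apply Hc; pose proof (Rmin_l (x - a) (b - x)); pose proof (Rmin_r (x - a) (b - x)).
  apply Rabs_def2 in Ht; lra.
Qed.

Lemma continuity_pt_eq0_of_approx f a : continuity_pt f a ->
  (forall del, 0 < del -> exists x, x <> a /\ Rabs (x - a) < del /\ f x = 0) -> f a = 0.
Proof.
  intros Hc H; destruct (Req_dec (f a) 0) as [|Hne]; auto; exfalso.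
  assert (Hp : 0 < Rabs (f a)) by (apply Rabs_pos_lt; auto).
  destruct (Hc (Rabs (f a)) Hp) as [del [Hdel Hx]].
  destruct (H del Hdel) as [x [Hxa [Hxd Hfx]]].
  assert (Habs : Rabs (f x - f a) < Rabs (f a)) by (apply Hx; repeat split; auto).
  rewrite Hfx, Rminus_0_l, Rabs_Ropp in Habs; lra.
Qed.

Lemma derivable_pt_lim_0_glue f g x0 e : 0 < e -> derivable_pt_lim g x0 0 -> f x0 = g x0 ->
  (forall t, Rabs (t - x0) < e -> f t = g t \/ f t = f x0) -> derivable_pt_lim f x0 0.
Proof.
  intros He Hg Hf0 H eps Heps; destruct (Hg eps Heps) as [del Hdel].
  assert (Hp : 0 < Rmin del e) by (apply Rmin_pos; [apply cond_pos|lra]).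
  exists (mkposreal _ Hp); intros h Hh0 Hh; simpl in Hh.
  pose proof (Rmin_l del e); pose proof (Rmin_r del e).
  destruct (H (x0 + h)) as [E|E]; [replace (x0 + h - x0) with h by ring; lra| |].
  - rewrite E, Hf0; apply Hdel; auto; lra.
  - rewrite E; replace ((f x0 - f x0) / h - 0) with 0 by (field; auto); rewrite Rabs_R0; auto.
Qed.

(** * Families indexed by the annuli *)
Definition family := nat -> R -> R -> R.

(** The open neighbourhood of the annulus [2^-n <= |z| <= 2^(1-n)] on which the formula of
    index [n] describes [u] (it covers the gluing zones with both neighbouring annuli). *)
Definition near_annulus (n : nat) (x y : R) : Prop := 3 / 4 / 2 ^ n < Rnorm x y < 5 / 2 / 2 ^ n.

Lemma near_annulus_pos n x y : near_annulus n x y -> 0 < Rnorm x y.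
Proof.
  intros [H _]; pose proof (pow2_pos n).
  assert (0 < 3 / 4 / 2 ^ n) by (apply Rdiv_lt_0_compat; lra); lra.
Qed.

Lemma near_annulus_open n x y : near_annulus n x y ->
  exists e, 0 < e /\ forall a b, Rnorm (a - x) (b - y) < e -> near_annulus n a b.
Proof.
  intros [H1 H2]; pose proof (Rmin_l (Rnorm x y - 3 / 4 / 2 ^ n) (5 / 2 / 2 ^ n - Rnorm x y)).
  pose proof (Rmin_r (Rnorm x y - 3 / 4 / 2 ^ n) (5 / 2 / 2 ^ n - Rnorm x y)).
  exists (Rmin (Rnorm x y - 3 / 4 / 2 ^ n) (5 / 2 / 2 ^ n - Rnorm x y)).
  split; [apply Rmin_pos; lra|]; intros a b Hab.
  pose proof (Rnorm_Rabs_sub x y a b) as Habs.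
  assert (Habs' : Rabs (Rnorm a b - Rnorm x y) <
                  Rmin (Rnorm x y - 3 / 4 / 2 ^ n) (5 / 2 / 2 ^ n - Rnorm x y)) by lra.
  apply Rabs_def2 in Habs'; split; lra.
Qed.

Lemma near_annulus_open_x n x y : near_annulus n x y ->
  exists e, 0 < e /\ forall t, Rabs (t - x) < e -> near_annulus n t y.
Proof.
  intro H; destruct (near_annulus_open n x y H) as [e [He H']]; exists e; split; auto.
  intros t Ht; apply H'; rewrite Rminus_diag, Rnorm_r0; auto.
Qed.

Lemma near_annulus_open_y n x y : near_annulus n x y ->
  exists e, 0 < e /\ forall t, Rabs (t - y) < e -> near_annulus n x t.
Proof.
  intro H; destruct (near_annulus_open n x y H) as [e [He H']]; exists e; split; auto.
  intros t Ht; apply H'; rewrite Rminus_diag, Rnorm_0l; auto.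
Qed.

Definition exp_bounded (c : nat -> R) : Prop :=
  exists K m, 0 <= K /\ forall n, (1 <= n)%nat -> Rabs (c n) <= K * 2 ^ (m * n).

Definition bounded_by (X : nat -> R) (G : family) : Prop :=
  exists K m, 0 <= K /\
    forall n x y, (1 <= n)%nat -> near_annulus n x y -> Rabs (G n x y) <= K * 2 ^ (m * n) * X n.

Definition partials (G Gx Gy : family) : Prop :=
  forall n x y, (1 <= n)%nat -> near_annulus n x y ->
    derivable_pt_lim (fun t => G n t y) x (Gx n x y) /\
    derivable_pt_lim (fun t => G n x t) y (Gy n x y).

Lemma exp_bounded_const r : exp_bounded (fun _ => r).
Proof. exists (Rabs r), 0%nat; split; [apply Rabs_pos|intros; simpl; lra]. Qed.

Lemma exp_bounded_opp c : exp_bounded c -> exp_bounded (fun n => - c n).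
Proof. intros [K [m [HK H]]]; exists K, m; split; auto; intros; rewrite Rabs_Ropp; auto. Qed.

Lemma exp_bounded_mul_INR c j k : exp_bounded c -> exp_bounded (fun n => c n * INR (n + j - 1 - k)).
Proof.
  intros [K [m [HK H]]]; exists K, (m + S j)%nat; split; auto; intros n Hn.
  rewrite Rabs_mult, (Rabs_right (INR _)) by apply Rle_ge, pos_INR.
  rewrite pow2_mul_add, <- Rmult_assoc; apply Rmult_le_compat; auto; [apply Rabs_pos|apply pos_INR|].
  eapply Rle_trans; [apply INR_le_pow2|apply pow2_le; nia].
Qed.

Lemma exp_weight_nonneg K a X : 0 <= K -> 0 <= X -> 0 <= K * 2 ^ a * X.
Proof. intros; pose proof (pow2_pos a); apply Rmult_le_pos; auto; apply Rmult_le_pos; lra. Qed.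

Lemma bounded_by_ext X a b : bounded_by X a ->
  (forall n x y, (1 <= n)%nat -> near_annulus n x y -> b n x y = a n x y) -> bounded_by X b.
Proof. intros [K [m [HK H]]] E; exists K, m; split; auto; intros; rewrite E; auto. Qed.

Lemma bounded_by_add X a b : (forall n, 0 <= X n) -> bounded_by X a -> bounded_by X b ->
  bounded_by X (fun n x y => a n x y + b n x y).
Proof.
  intros HX [K1 [m1 [HK1 Ha]]] [K2 [m2 [HK2 Hb]]]; exists (K1 + K2), (m1 + m2)%nat.
  split; [lra|]; intros n x y Hn Hxy; rewrite pow2_mul_add.
  pose proof (pow2_ge1 (m1 * n)); pose proof (pow2_ge1 (m2 * n)); pose proof (HX n).
  specialize (Ha n x y Hn Hxy); specialize (Hb n x y Hn Hxy).
  eapply Rle_trans; [apply Rabs_triang|].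
  assert (K1 * 2 ^ (m1 * n) * X n <= K1 * (2 ^ (m1 * n) * 2 ^ (m2 * n)) * X n)
    by (apply Rmult_le_compat_r; auto; apply Rmult_le_compat_l; auto; nra).
  assert (K2 * 2 ^ (m2 * n) * X n <= K2 * (2 ^ (m1 * n) * 2 ^ (m2 * n)) * X n)
    by (apply Rmult_le_compat_r; auto; apply Rmult_le_compat_l; auto; nra).
  nra.
Qed.

Lemma bounded_by_mul X Y a b : bounded_by X a -> bounded_by Y b ->
  bounded_by (fun n => X n * Y n) (fun n x y => a n x y * b n x y).
Proof.
  intros [K1 [m1 [HK1 Ha]]] [K2 [m2 [HK2 Hb]]]; exists (K1 * K2), (m1 + m2)%nat.
  split; [nra|]; intros n x y Hn Hxy; rewrite pow2_mul_add, Rabs_mult.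
  replace (K1 * K2 * (2 ^ (m1 * n) * 2 ^ (m2 * n)) * (X n * Y n)) with
    ((K1 * 2 ^ (m1 * n) * X n) * (K2 * 2 ^ (m2 * n) * Y n)) by ring.
  apply Rmult_le_compat; auto; apply Rabs_pos.
Qed.

Lemma bounded_by_parity X a b : (forall n, 0 <= X n) -> bounded_by X a -> bounded_by X b ->
  bounded_by X (fun n x y => if Nat.even n then a n x y else b n x y).
Proof.
  intros HX Ha Hb; assert (Hz : bounded_by X (fun _ _ _ => 0))
    by (exists 0, 0%nat; split; [lra|intros; rewrite Rabs_R0; lra]).
  destruct (bounded_by_add X _ _ HX Ha Hz) as [K1 [m1 [HK1 H1]]].
  destruct (bounded_by_add X _ _ HX Hz Hb) as [K2 [m2 [HK2 H2]]].
  exists (K1 + K2), (m1 + m2)%nat; split; [lra|]; intros n x y Hn Hxy.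
  specialize (H1 n x y Hn Hxy); specialize (H2 n x y Hn Hxy).
  pose proof (exp_weight_nonneg K1 (m1 * n) (X n) HK1 (HX n)).
  pose proof (exp_weight_nonneg K2 (m2 * n) (X n) HK2 (HX n)).
  rewrite pow2_mul_add; pose proof (pow2_ge1 (m1 * n)); pose proof (pow2_ge1 (m2 * n)).
  assert (K1 * 2 ^ (m1 * n) * X n <= K1 * (2 ^ (m1 * n) * 2 ^ (m2 * n)) * X n)
    by (apply Rmult_le_compat_r; auto; apply Rmult_le_compat_l; auto; nra).
  assert (K2 * 2 ^ (m2 * n) * X n <= K2 * (2 ^ (m1 * n) * 2 ^ (m2 * n)) * X n)
    by (apply Rmult_le_compat_r; auto; apply Rmult_le_compat_l; auto; nra).
  destruct (Nat.even n); [rewrite Rplus_0_r in H1|rewrite Rplus_0_l in H2]; nra.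
Qed.

Lemma partials_ext a b ax ay : partials a ax ay ->
  (forall n x y, (1 <= n)%nat -> near_annulus n x y -> b n x y = a n x y) -> partials b ax ay.
Proof.
  intros H E n x y Hn Hx; destruct (H n x y Hn Hx) as [H1 H2]; split.
  - destruct (near_annulus_open_x n x y Hx) as [e [He He']].
    apply (derivable_pt_lim_near (fun t => a n t y) _ _ _ e He); auto; intros; rewrite E; auto.
  - destruct (near_annulus_open_y n x y Hx) as [e [He He']].
    apply (derivable_pt_lim_near (fun t => a n x t) _ _ _ e He); auto; intros; rewrite E; auto.
Qed.

Lemma partials_add a b ax ay bx b_y : partials a ax ay -> partials b bx b_y ->
  partials (fun n x y => a n x y + b n x y)
           (fun n x y => ax n x y + bx n x y) (fun n x y => ay n x y + b_y n x y).
Proof.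
  intros Pa Pb n x y Hn Hx; destruct (Pa n x y Hn Hx), (Pb n x y Hn Hx); split.
  - apply (derivable_pt_lim_plus (fun t => a n t y) (fun t => b n t y)); auto.
  - apply (derivable_pt_lim_plus (fun t => a n x t) (fun t => b n x t)); auto.
Qed.

Lemma partials_mul a b ax ay bx b_y : partials a ax ay -> partials b bx b_y ->
  partials (fun n x y => a n x y * b n x y)
           (fun n x y => ax n x y * b n x y + a n x y * bx n x y)
           (fun n x y => ay n x y * b n x y + a n x y * b_y n x y).
Proof.
  intros Pa Pb n x y Hn Hx; destruct (Pa n x y Hn Hx), (Pb n x y Hn Hx); split.
  - apply (derivable_pt_lim_mult (fun t => a n t y) (fun t => b n t y)); auto.
  - apply (derivable_pt_lim_mult (fun t => a n x t) (fun t => b n x t)); auto.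
Qed.

Lemma partials_parity a b ax ay bx b_y : partials a ax ay -> partials b bx b_y ->
  partials (fun n x y => if Nat.even n then a n x y else b n x y)
           (fun n x y => if Nat.even n then ax n x y else bx n x y)
           (fun n x y => if Nat.even n then ay n x y else b_y n x y).
Proof.
  intros Pa Pb n x y Hn Hx; destruct (Pa n x y Hn Hx), (Pb n x y Hn Hx).
  destruct (Nat.even n); split; auto.
Qed.

Lemma bounded_by_mul_unit X a b : bounded_by X a -> bounded_by (fun _ => 1) b ->
  bounded_by X (fun n x y => a n x y * b n x y).
Proof.
  intros Ha Hb; destruct (bounded_by_mul _ _ _ _ Ha Hb) as [K [m [HK H]]].
  exists K, m; split; auto; intros n x y Hn Hxy; rewrite <- (Rmult_1_r (X n)); auto.
Qed.

(** * Smoothness of functions represented by small families *)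

(** Partial derivatives chosen by [epsilon]; the value is meaningless where none exists. *)
Definition partial_x (g : R -> R -> R) (x y : R) : R :=
  epsilon (inhabits 0) (fun l => derivable_pt_lim (fun t => g t y) x l).
Definition partial_y (g : R -> R -> R) (x y : R) : R :=
  epsilon (inhabits 0) (fun l => derivable_pt_lim (fun t => g x t) y l).

Lemma partial_x_eq g x y l : derivable_pt_lim (fun t => g t y) x l -> partial_x g x y = l.
Proof.
  intro H; eapply uniqueness_limite; [|exact H].
  apply (epsilon_spec (inhabits 0) (fun l => derivable_pt_lim (fun t => g t y) x l)); eauto.
Qed.

Lemma partial_y_eq g x y l : derivable_pt_lim (fun t => g x t) y l -> partial_y g x y = l.
Proof.
  intro H; eapply uniqueness_limite; [|exact H].
  apply (epsilon_spec (inhabits 0) (fun l => derivable_pt_lim (fun t => g x t) y l)); eauto.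
Qed.

CoInductive Smooth : (R -> R -> R) -> Prop :=
| Smooth_intro g : (forall x y, D1 x y -> cont2_at g x y) ->
    (forall x y, D1 x y -> derivable_pt_lim (fun t => g t y) x (partial_x g x y) /\
                           derivable_pt_lim (fun t => g x t) y (partial_y g x y)) ->
    Smooth (partial_x g) -> Smooth (partial_y g) -> Smooth g.

Lemma Smooth_smooth2 g : Smooth g -> smooth2 D1 g.
Proof.
  intros H k; revert g H; induction k as [|k IH]; intros g [g' Hc Hd Hx Hy]; simpl; auto.
  split; auto; exists (partial_x g'), (partial_y g'); split; auto.
Qed.

Definition represents (G : family) (g : R -> R -> R) : Prop :=
  forall x y, D1 x y -> 0 < Rnorm x y ->
    exists n e, (1 <= n)%nat /\ 0 < e /\
      forall a b, Rnorm (a - x) (b - y) < e -> near_annulus n a b /\ g a b = G n a b.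

Lemma represents_at G g x y : represents G g -> D1 x y -> 0 < Rnorm x y ->
  exists n, (1 <= n)%nat /\ near_annulus n x y /\ g x y = G n x y.
Proof.
  intros H H1 H2; destruct (H x y H1 H2) as [n [e [Hn [He Hb]]]]; exists n; split; auto.
  apply Hb; rewrite Rnorm_sub_diag; auto.
Qed.

Lemma near_annulus_index_ge n N x y : near_annulus n x y -> Rnorm x y < 1 / 2 ^ N -> (N <= n)%nat.
Proof.
  intros [H1 _] H2; destruct (Nat.le_gt_cases N n) as [|Hlt]; auto; exfalso.
  assert (H2n : 2 ^ S n <= 2 ^ N) by (apply pow2_le; lia); simpl in H2n; pose proof (pow2_pos n).
  assert (1 / 2 ^ N <= 1 / (2 * 2 ^ n))
    by (unfold Rdiv; apply Rmult_le_compat_l; [lra|apply Rinv_le_contravar; lra]).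
  assert (1 / (2 * 2 ^ n) < 3 / 4 / 2 ^ n)
    by (unfold Rdiv; rewrite Rinv_mult; apply (Rmult_lt_reg_r (2 ^ n)); auto; field_simplify; lra).
  lra.
Qed.

(** A function represented by a family of size [2^O(n) gauss n] is [o(|z|^k)] for every [k]:
    on the [n]-th annulus [|z|^k >= (3/4)^k 2^(-kn)], which [gauss] beats. *)
Lemma represents_small g G : bounded_by gauss G -> represents G g -> forall k eps, 0 < eps ->
  exists del, 0 < del /\
    forall x y, D1 x y -> 0 < Rnorm x y < del -> Rabs (g x y) <= eps * Rnorm x y ^ k.
Proof.
  intros [K [m [HK HB]]] HR k eps He.
  destruct (gauss_decay (K * (4 / 3) ^ k) (m + k) eps He) as [N HN].
  exists (1 / 2 ^ N); split; [unfold Rdiv; rewrite Rmult_1_l; apply Rinv_0_lt_compat, pow2_pos|].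
  intros x y HD [Hp Hl]; destruct (represents_at G g x y HR HD Hp) as [n [Hn [HE ->]]].
  pose proof (near_annulus_index_ge n N x y HE Hl); pose proof (pow2_pos n).
  eapply Rle_trans; [apply HB; auto|].
  assert (Hid : K * 2 ^ (m * n) * gauss n =
                (K * (4 / 3) ^ k * 2 ^ ((m + k) * n) * gauss n) * (3 / 4 / 2 ^ n) ^ k).
  { assert (EB : 2 ^ (k * n) = (2 ^ n) ^ k) by (rewrite Nat.mul_comm, pow_mult; auto).
    assert (E3 : (3 / 4 / 2 ^ n) ^ k = (3 / 4) ^ k * / (2 ^ n) ^ k)
      by (unfold Rdiv; rewrite Rpow_mult_distr, pow_inv; auto).
    assert (E4 : (4 / 3) ^ k * (3 / 4) ^ k = 1)
      by (rewrite <- Rpow_mult_distr; replace (4 / 3 * (3 / 4)) with 1 by field; apply pow1).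
    assert (0 < (2 ^ n) ^ k) by (apply pow_lt, pow2_pos).
    rewrite pow2_mul_add, EB, E3.
    transitivity (K * 2 ^ (m * n) * gauss n * ((4 / 3) ^ k * (3 / 4) ^ k) * ((2 ^ n) ^ k * / (2 ^ n) ^ k));
      [rewrite E4, Rinv_r by lra; ring|ring]. }
  rewrite Hid; apply Rmult_le_compat.
  - apply exp_weight_nonneg; [apply Rmult_le_pos; [auto|apply pow_le; lra]|left; apply gauss_pos].
  - apply pow_le; apply Rlt_le, Rdiv_lt_0_compat; lra.
  - apply HN; auto.
  - apply pow_incr; split; [apply Rlt_le, Rdiv_lt_0_compat; lra|destruct HE; lra].
Qed.

Lemma derivable_pt_lim_0_of_small h : h 0 = 0 ->
  (forall eps, 0 < eps -> exists del, 0 < del /\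
     forall t, 0 < Rabs t < del -> Rabs (h t) <= eps * Rabs t) ->
  derivable_pt_lim h 0 0.
Proof.
  intros H0 Hs eps He; destruct (Hs (eps / 2)) as [del [Hdel Hsm]]; [lra|].
  exists (mkposreal _ Hdel); intros t Ht Htd; simpl in Htd.
  assert (Hpos : 0 < Rabs t) by (apply Rabs_pos_lt; auto).
  rewrite Rplus_0_l, H0, !Rminus_0_r; unfold Rdiv; rewrite Rabs_mult, Rabs_inv.
  apply (Rmult_lt_reg_r (Rabs t)); auto; rewrite Rmult_assoc, Rinv_l by lra.
  specialize (Hsm t (conj Hpos Htd)); nra.
Qed.

Section Origin.

Variables (g : R -> R -> R) (G : family).
Hypotheses (HB : bounded_by gauss G) (HR : represents G g) (H0 : g 0 0 = 0).

Lemma represents_small_1 eps : 0 < eps -> exists del, 0 < del /\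
  forall x y, 0 < Rnorm x y < del -> Rabs (g x y) <= eps * Rnorm x y.
Proof.
  intro He; destruct (represents_small g G HB HR 1 eps He) as [del [Hdel Hs]].
  exists (Rmin del 1); split; [apply Rmin_pos; lra|]; intros x y Hxy.
  pose proof (Rmin_l del 1); pose proof (Rmin_r del 1).
  rewrite <- (pow_1 (Rnorm x y)); apply Hs; unfold D1; lra.
Qed.

Lemma represents_partial_x_origin : derivable_pt_lim (fun t => g t 0) 0 0.
Proof.
  apply derivable_pt_lim_0_of_small; auto; intros eps He.
  destruct (represents_small_1 eps He) as [del [Hdel Hs]]; exists del; split; auto.
  intros t Ht; specialize (Hs t 0); rewrite Rnorm_r0 in Hs; auto.
Qed.

Lemma represents_partial_y_origin : derivable_pt_lim (fun t => g 0 t) 0 0.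
Proof.
  apply derivable_pt_lim_0_of_small; auto; intros eps He.
  destruct (represents_small_1 eps He) as [del [Hdel Hs]]; exists del; split; auto.
  intros t Ht; specialize (Hs 0 t); rewrite Rnorm_0l in Hs; auto.
Qed.

Lemma represents_cont_origin : cont2_at g 0 0.
Proof.
  intros eps He; destruct (represents_small_1 (eps / 2)) as [del [Hdel Hs]]; [lra|].
  exists (Rmin del 1); split; [apply Rmin_pos; lra|]; intros x' y' Hl.
  rewrite !Rminus_0_r in Hl; rewrite H0, Rminus_0_r.
  pose proof (Rmin_l del 1); pose proof (Rmin_r del 1).
  destruct (Req_dec (Rnorm x' y') 0) as [E|E].
  - destruct (Rnorm_eq0 _ _ E) as [-> ->]; rewrite H0, Rabs_R0; auto.
  - pose proof (Rnorm_nonneg x' y'); assert (Rabs (g x' y') <= eps / 2 * Rnorm x' y') by (apply Hs; lra).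
    nra.
Qed.

End Origin.

Lemma represents_partials g G Gx Gy n x y e a b : partials G Gx Gy -> (1 <= n)%nat ->
  (forall a b, Rnorm (a - x) (b - y) < e -> near_annulus n a b /\ g a b = G n a b) ->
  Rnorm (a - x) (b - y) < e ->
  derivable_pt_lim (fun t => g t b) a (Gx n a b) /\ derivable_pt_lim (fun t => g a t) b (Gy n a b).
Proof.
  intros HP Hn Hb Hab; destruct (Hb a b Hab) as [HE _]; destruct (HP n a b Hn HE) as [P1 P2].
  set (r := e - Rnorm (a - x) (b - y)).
  split; [apply (derivable_pt_lim_near (fun t => G n t b) _ _ _ r)|
          apply (derivable_pt_lim_near (fun t => G n a t) _ _ _ r)]; auto; unfold r; try lra;
    intros t Ht; symmetry; apply Hb.
  - pose proof (Rnorm_triangle (t - a) 0 (a - x) (b - y)) as Ht'.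
    replace (t - a + (a - x)) with (t - x) in Ht' by ring.
    replace (0 + (b - y)) with (b - y) in Ht' by ring.
    rewrite Rnorm_r0 in Ht'; lra.
  - pose proof (Rnorm_triangle 0 (t - b) (a - x) (b - y)) as Ht'.
    replace (0 + (a - x)) with (a - x) in Ht' by ring.
    replace (t - b + (b - y)) with (t - y) in Ht' by ring.
    rewrite Rnorm_0l in Ht'; lra.
Qed.

(** * The cutoff and the construction *)

Section Construction.

Variable d : nat -> R -> R.
Hypothesis d_deriv : forall n x, derivable_pt_lim (d n) x (d (S n) x).
Hypothesis d0_low : forall x, 0 <= x <= 1 / 4 -> d 0%nat x = 0.
Hypothesis d0_high : forall x, 3 / 4 <= x <= 1 -> d 0%nat x = 1.

Lemma d_continuity k x : continuity_pt (d k) x.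
Proof. apply derivable_continuous_pt; exists (d (S k) x); apply d_deriv. Qed.

Lemma d_succ_low k x : 0 < x < 1 / 4 -> d (S k) x = 0.
Proof.
  revert x; induction k as [|k IH]; intros x Hx.
  - apply (derivable_pt_lim_const_interval (d 0) (d 1) 0 (1 / 4) 0); auto.
    intros; apply d0_low; lra.
  - apply (derivable_pt_lim_const_interval (d (S k)) (d (S (S k))) 0 (1 / 4) 0); auto.
Qed.

Lemma d_succ_high k x : 3 / 4 < x < 1 -> d (S k) x = 0.
Proof.
  revert x; induction k as [|k IH]; intros x Hx.
  - apply (derivable_pt_lim_const_interval (d 0) (d 1) (3 / 4) 1 1); auto.
    intros; apply d0_high; lra.
  - apply (derivable_pt_lim_const_interval (d (S k)) (d (S (S k))) (3 / 4) 1 0); auto.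
Qed.

Lemma d_quarter k : d k (1 / 4) = 0.
Proof.
  destruct k; [apply d0_low; lra|].
  apply continuity_pt_eq0_of_approx; [apply d_continuity|]; intros del Hdel.
  exists (1 / 4 - Rmin (del / 2) (1 / 8)); pose proof (Rmin_l (del / 2) (1 / 8)).
  pose proof (Rmin_r (del / 2) (1 / 8)); assert (0 < Rmin (del / 2) (1 / 8)) by (apply Rmin_pos; lra).
  repeat split; [lra|rewrite Rabs_left; lra|apply d_succ_low; lra].
Qed.

Lemma d_succ_three_quarters k : d (S k) (3 / 4) = 0.
Proof.
  apply continuity_pt_eq0_of_approx; [apply d_continuity|]; intros del Hdel.
  exists (3 / 4 + Rmin (del / 2) (1 / 8)); pose proof (Rmin_l (del / 2) (1 / 8)).
  pose proof (Rmin_r (del / 2) (1 / 8)); assert (0 < Rmin (del / 2) (1 / 8)) by (apply Rmin_pos; lra).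
  repeat split; [lra|rewrite Rabs_right; lra|apply d_succ_high; lra].
Qed.

(** The cutoff hypotheses only pin down [s] on [[0, 1]], where its argument lives on the
    annuli; [dext k] is [d k] continued by its constant values outside [[1/4, 3/4]], which makes
    every [dext k] a globally defined derivative of [dext (k - 1)] and globally bounded. *)
Definition dext (k : nat) (t : R) : R :=
  if Rlt_dec t (1 / 4) then 0
  else if Rlt_dec (3 / 4) t then (match k with O => 1 | _ => 0 end) else d k t.

Lemma dext_mid k t : 1 / 4 <= t <= 3 / 4 -> dext k t = d k t.
Proof.
  intro; unfold dext; destruct (Rlt_dec t (1 / 4)); [lra|].
  destruct (Rlt_dec (3 / 4) t); [lra|auto].
Qed.

Lemma dext_low k t : t < 1 / 4 -> dext k t = 0.
Proof. intro; unfold dext; destruct (Rlt_dec t (1 / 4)); [auto|lra]. Qed.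

Lemma dext_high k t : 3 / 4 < t -> dext k t = match k with O => 1 | _ => 0 end.
Proof.
  intro; unfold dext; destruct (Rlt_dec t (1 / 4)); [lra|].
  destruct (Rlt_dec (3 / 4) t); [auto|lra].
Qed.

Lemma dext0_unit t : 0 <= t <= 1 -> dext 0 t = d 0 t.
Proof.
  intro; unfold dext; destruct (Rlt_dec t (1 / 4)); [rewrite d0_low; lra|].
  destruct (Rlt_dec (3 / 4) t); [rewrite d0_high; lra|auto].
Qed.

Lemma dext_deriv k t : derivable_pt_lim (dext k) t (dext (S k) t).
Proof.
  destruct (Rtotal_order t (1 / 4)) as [H1|[->|H1]].
  - rewrite dext_low by lra.
    apply (derivable_pt_lim_near (fun _ => 0) _ _ _ (1 / 4 - t)); [lra| |].
    + intros v Hv; apply Rabs_def2 in Hv; rewrite dext_low; auto; lra.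
    + apply (derivable_pt_lim_cst_fun _ _ 0); auto.
  - rewrite dext_mid, d_quarter by lra.
    apply (derivable_pt_lim_0_glue _ (d k) _ (1 / 4)); [lra|rewrite <- (d_quarter (S k)); apply d_deriv|
      apply dext_mid; lra|].
    intros v Hv; apply Rabs_def2 in Hv; destruct (Rlt_dec v (1 / 4)).
    + right; rewrite dext_low, dext_mid, d_quarter; lra.
    + left; apply dext_mid; lra.
  - destruct (Rtotal_order t (3 / 4)) as [H2|[->|H2]].
    + rewrite dext_mid by lra; apply (derivable_pt_lim_near (d k) _ _ _ (Rmin (t - 1 / 4) (3 / 4 - t)));
        [apply Rmin_pos; lra| |apply d_deriv].
      intros v Hv; apply Rabs_def2 in Hv; pose proof (Rmin_l (t - 1 / 4) (3 / 4 - t)).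
      pose proof (Rmin_r (t - 1 / 4) (3 / 4 - t)); rewrite dext_mid; auto; lra.
    + rewrite dext_mid, d_succ_three_quarters by lra.
      apply (derivable_pt_lim_0_glue _ (d k) _ (1 / 4)); [lra|rewrite <- (d_succ_three_quarters k);
        apply d_deriv|apply dext_mid; lra|].
      intros v Hv; apply Rabs_def2 in Hv; destruct (Rlt_dec (3 / 4) v).
      * right; rewrite dext_high, dext_mid by lra; destruct k; [rewrite d0_high; lra|].
        rewrite d_succ_three_quarters; auto.
      * left; apply dext_mid; lra.
    + rewrite dext_high by lra.
      apply (derivable_pt_lim_near (fun _ => match k with O => 1 | _ => 0 end) _ _ _ (t - 3 / 4)); [lra| |].
      * intros v Hv; apply Rabs_def2 in Hv; rewrite dext_high; auto; lra.
      * apply (derivable_pt_lim_cst_fun _ _ (match k with O => 1 | _ => 0 end)); auto.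
Qed.

Lemma dext_bounded k : exists M, 0 <= M /\ forall t, Rabs (dext k t) <= M.
Proof.
  destruct (continuity_ab_maj (d k) (1 / 4) (3 / 4)) as [a [Ha1 Ha2]];
    [lra|intros; apply d_continuity|].
  destruct (continuity_ab_maj (fun t => - d k t) (1 / 4) (3 / 4)) as [b [Hb1 Hb2]];
    [lra|intros; apply continuity_pt_opp, d_continuity|].
  pose proof (Rabs_pos (d k a)); pose proof (Rabs_pos (d k b)).
  pose proof (Rle_abs (d k a)); pose proof (Rle_abs (- d k b)); rewrite Rabs_Ropp in *.
  exists (1 + Rabs (d k a) + Rabs (d k b)); split; [lra|]; intro t.
  destruct (Rlt_dec t (1 / 4)); [rewrite dext_low, Rabs_R0; lra|].
  destruct (Rlt_dec (3 / 4) t).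
  - rewrite dext_high by lra; destruct k; [rewrite Rabs_R1|rewrite Rabs_R0]; lra.
  - rewrite dext_mid by lra; specialize (Ha1 t); specialize (Hb1 t).
    apply Rabs_le; split; [assert (- d k t <= - d k b) by (apply Hb1; lra)|
                           assert (d k t <= d k a) by (apply Ha1; lra)]; lra.
Qed.

Inductive Tame : family -> Prop :=
| Tame_const c : exp_bounded c -> Tame (fun n _ _ => c n)
| Tame_x : Tame (fun _ x _ => x)
| Tame_y : Tame (fun _ _ y => y)
| Tame_inv_norm : Tame (fun _ x y => / Rnorm x y)
| Tame_cutoff j : Tame (fun n x y => dext j (2 ^ n * Rnorm x y - 1))
| Tame_add a b : Tame a -> Tame b -> Tame (fun n x y => a n x y + b n x y)
| Tame_mul a b : Tame a -> Tame b -> Tame (fun n x y => a n x y * b n x y)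
| Tame_ext a b : Tame a ->
    (forall n x y, (1 <= n)%nat -> near_annulus n x y -> b n x y = a n x y) -> Tame b.

Lemma Tame_scal r a : Tame a -> Tame (fun n x y => r * a n x y).
Proof. intro; apply (Tame_mul (fun _ _ _ => r)); [apply Tame_const, exp_bounded_const|auto]. Qed.

Lemma Tame_bounded G : Tame G -> bounded_by (fun _ => 1) G.
Proof.
  assert (Hcoord : forall n x y, near_annulus n x y -> Rabs x <= 5 / 2 * 2 ^ (0 * n) * 1).
  { intros n x y [_ Hx]; pose proof (Rabs_le_Rnorm x y); pose proof (pow2_ge1 n); simpl.
    assert (5 / 2 / 2 ^ n <= 5 / 2); [|lra].
    unfold Rdiv; rewrite <- (Rmult_1_r (5 / 2)) at 2; apply Rmult_le_compat_l; [lra|].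
    rewrite <- Rinv_1; apply Rinv_le_contravar; lra. }
  induction 1.
  - destruct H as [K [m [HK H]]]; exists K, m; split; auto; intros; rewrite Rmult_1_r; auto.
  - exists (5 / 2), 0%nat; split; [lra|]; intros n x y _ Hxy; apply (Hcoord n x y Hxy).
  - exists (5 / 2), 0%nat; split; [lra|]; intros n x y _ Hxy; apply (Hcoord n y x).
    destruct Hxy; split; rewrite Rnorm_sym; auto.
  - exists (4 / 3), 1%nat; split; [lra|]; intros n x y Hn Hx.
    pose proof (near_annulus_pos n x y Hx); destruct Hx as [Hx _]; pose proof (pow2_pos n).
    rewrite Rmult_1_r, Nat.mul_1_l, Rabs_right by (left; apply Rinv_0_lt_compat; auto).
    replace (4 / 3 * 2 ^ n) with (/ (3 / 4 / 2 ^ n)) by (field; lra).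
    apply Rinv_le_contravar; [apply Rdiv_lt_0_compat|]; lra.
  - destruct (dext_bounded j) as [M [HM HMb]].
    exists M, 0%nat; split; auto; intros; simpl; rewrite !Rmult_1_r; auto.
  - apply bounded_by_add; auto; intros; lra.
  - apply bounded_by_mul_unit; auto.
  - apply (bounded_by_ext _ a); auto.
Qed.

Lemma partials_inv_norm : partials (fun _ x y => / Rnorm x y)
  (fun _ x y => -1 * (x * (/ Rnorm x y * (/ Rnorm x y * / Rnorm x y))))
  (fun _ x y => -1 * (y * (/ Rnorm x y * (/ Rnorm x y * / Rnorm x y)))).
Proof.
  intros n x y _ Hx; pose proof (near_annulus_pos n x y Hx); split; eapply derivable_pt_lim_eq.
  - apply (derivable_pt_lim_inv (fun t => Rnorm t y)); [apply derivable_pt_lim_Rnorm_x|]; auto; lra.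
  - field; lra.
  - apply (derivable_pt_lim_inv (fun t => Rnorm x t)); [apply derivable_pt_lim_Rnorm_y|]; auto; lra.
  - field; lra.
Qed.

Lemma partials_cutoff j : partials (fun n x y => dext j (2 ^ n * Rnorm x y - 1))
  (fun n x y => dext (S j) (2 ^ n * Rnorm x y - 1) * (2 ^ n * (x * / Rnorm x y)))
  (fun n x y => dext (S j) (2 ^ n * Rnorm x y - 1) * (2 ^ n * (y * / Rnorm x y))).
Proof.
  intros n x y Hn Hx; pose proof (near_annulus_pos n x y Hx); split; eapply derivable_pt_lim_eq.
  - apply (derivable_pt_lim_comp (fun t => 2 ^ n * Rnorm t y - 1) (dext j)); [|apply dext_deriv].
    apply (derivable_pt_lim_minus (fun t => 2 ^ n * Rnorm t y) (fun _ => 1));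
      [apply (derivable_pt_lim_scal (fun t => Rnorm t y)), derivable_pt_lim_Rnorm_x; auto|].
    apply (derivable_pt_lim_cst_fun _ _ 1); auto.
  - unfold Rdiv; ring.
  - apply (derivable_pt_lim_comp (fun t => 2 ^ n * Rnorm x t - 1) (dext j)); [|apply dext_deriv].
    apply (derivable_pt_lim_minus (fun t => 2 ^ n * Rnorm x t) (fun _ => 1));
      [apply (derivable_pt_lim_scal (fun t => Rnorm x t)), derivable_pt_lim_Rnorm_y; auto|].
    apply (derivable_pt_lim_cst_fun _ _ 1); auto.
  - unfold Rdiv; ring.
Qed.

Lemma Tame_diff G : Tame G -> exists Gx Gy, Tame Gx /\ Tame Gy /\ partials G Gx Gy.
Proof.
  assert (T0 : Tame (fun _ _ _ => 0)) by apply Tame_const, exp_bounded_const.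
  assert (T1 : Tame (fun _ _ _ => 1)) by apply Tame_const, exp_bounded_const.
  assert (Tpow : Tame (fun n _ _ => 2 ^ n)).
  { apply Tame_const; exists 1, 1%nat; split; [lra|]; intros.
    rewrite Nat.mul_1_l, Rabs_right by (left; apply pow2_pos); lra. }
  induction 1 as [c Hc| | | |j|a b _ [ax [ay [Tax [Tay Pa]]]] _ [bx [b_y [Tbx [Tby Pb]]]]
                 |a b Ta [ax [ay [Tax [Tay Pa]]]] Tb [bx [b_y [Tbx [Tby Pb]]]]
                 |a b _ [ax [ay [Tax [Tay Pa]]]] E].
  - exists (fun _ _ _ => 0), (fun _ _ _ => 0); repeat split; auto;
      apply (derivable_pt_lim_cst_fun _ _ (c n)); auto.
  - exists (fun _ _ _ => 1), (fun _ _ _ => 0); repeat split; auto;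
      [apply derivable_pt_lim_id|apply (derivable_pt_lim_cst_fun _ _ x); auto].
  - exists (fun _ _ _ => 0), (fun _ _ _ => 1); repeat split; auto;
      [apply (derivable_pt_lim_cst_fun _ _ y); auto|apply derivable_pt_lim_id].
  - assert (Tcube : Tame (fun _ x y => / Rnorm x y * (/ Rnorm x y * / Rnorm x y)))
      by (repeat apply Tame_mul; constructor).
    do 2 eexists; split; [|split; [|apply partials_inv_norm]]; apply Tame_scal.
    + apply (Tame_mul (fun _ x _ => x)); [constructor|exact Tcube].
    + apply (Tame_mul (fun _ _ y => y)); [constructor|exact Tcube].
  - do 2 eexists; split; [|split; [|apply partials_cutoff]];
      apply Tame_mul; [constructor| |constructor|]; apply (Tame_mul (fun n _ _ => 2 ^ n)); auto;
      repeat constructor.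
  - do 2 eexists; split; [|split; [|apply partials_add; eauto]]; constructor; auto.
  - do 2 eexists; split; [|split; [|apply partials_mul; eauto]]; apply Tame_add; apply Tame_mul; auto.
  - exists ax, ay; repeat split; auto; eapply partials_ext; eauto.
Qed.

(** In a monomial, [c n] must vanish whenever the exponent [n + j - 1 - k] is truncated. *)
Inductive Flat : family -> Prop :=
| Flat_monomial j k c (re : bool) : exp_bounded c -> (forall n, (n + j - 1 < k)%nat -> c n = 0) ->
    Flat (fun n x y => c n * F4 (n + j - 1) * cp re (Cpow (x, y) (n + j - 1 - k)))
| Flat_add a b : Flat a -> Flat b -> Flat (fun n x y => a n x y + b n x y)
| Flat_mul a b : Flat a -> Tame b -> Flat (fun n x y => a n x y * b n x y)
| Flat_parity a b : Flat a -> Flat b -> Flat (fun n x y => if Nat.even n then a n x y else b n x y)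
| Flat_ext a b : Flat a ->
    (forall n x y, (1 <= n)%nat -> near_annulus n x y -> b n x y = a n x y) -> Flat b.

Lemma bounded_by_monomial j k c re : exp_bounded c -> (forall n, (n + j - 1 < k)%nat -> c n = 0) ->
  bounded_by gauss (fun n x y => c n * F4 (n + j - 1) * cp re (Cpow (x, y) (n + j - 1 - k))).
Proof.
  intros [K [m [HK H]]] Hc0; exists (K * 2 ^ (j * j + 2 * j)), (m + (k + 2))%nat.
  pose proof (pow2_pos (j * j + 2 * j)); split; [nra|]; intros n x y Hn Hx.
  destruct (Nat.lt_ge_cases (n + j - 1) k) as [Hl|Hl].
  { rewrite Hc0, !Rmult_0_l, Rabs_R0 by auto.
    apply exp_weight_nonneg; [nra|left; apply gauss_pos]. }
  assert (Hc : Rabs (cp re (Cpow (x, y) (n + j - 1 - k))) <= (5 / 2 / 2 ^ n) ^ (n + j - 1 - k)).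
  { eapply Rle_trans; [apply Rabs_cp_Cpow_le|]; apply pow_incr; split; [apply Rnorm_nonneg|].
    destruct Hx; lra. }
  pose proof (F4_mul_pow_le n j k Hn Hl); pose proof (F4_pos (n + j - 1)); pose proof (pow2_pos (m * n)).
  rewrite !Rabs_mult, (Rabs_right (F4 _)), pow2_mul_add by lra.
  apply (Rle_trans _ ((K * 2 ^ (m * n)) * (F4 (n + j - 1) * (5 / 2 / 2 ^ n) ^ (n + j - 1 - k)))).
  - rewrite Rmult_assoc; apply Rmult_le_compat; auto; [apply Rabs_pos| |].
    + apply Rmult_le_pos; [lra|apply Rabs_pos].
    + apply Rmult_le_compat_l; lra.
  - replace (K * 2 ^ (j * j + 2 * j) * (2 ^ (m * n) * 2 ^ ((k + 2) * n)) * gauss n) with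
      ((K * 2 ^ (m * n)) * (2 ^ (j * j + 2 * j) * 2 ^ ((k + 2) * n) * gauss n)) by ring.
    apply Rmult_le_compat_l; nra.
Qed.

Lemma partials_monomial j k c re : partials
  (fun n x y => c n * F4 (n + j - 1) * cp re (Cpow (x, y) (n + j - 1 - k)))
  (fun n x y => (c n * INR (n + j - 1 - k)) * F4 (n + j - 1) * cp re (Cpow (x, y) (n + j - 1 - S k)))
  (fun n x y => (if re then - (c n * INR (n + j - 1 - k)) else c n * INR (n + j - 1 - k)) *
                F4 (n + j - 1) * cp (negb re) (Cpow (x, y) (n + j - 1 - S k))).
Proof.
  intros n x y _ _; replace (n + j - 1 - S k)%nat with (n + j - 1 - k - 1)%nat by lia; split.
  - eapply derivable_pt_lim_eq;
      [apply (derivable_pt_lim_scal (fun t => cp re (Cpow (t, y) _))), Cpow_partial_x|ring].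
  - eapply derivable_pt_lim_eq;
      [apply (derivable_pt_lim_scal (fun t => cp re (Cpow (x, t) _))), Cpow_partial_y|].
    destruct re; ring.
Qed.

Lemma Flat_bounded G : Flat G -> bounded_by gauss G.
Proof.
  assert (Hg : forall n, 0 <= gauss n) by (intro; left; apply gauss_pos).
  induction 1.
  - apply bounded_by_monomial; auto.
  - apply bounded_by_add; auto.
  - apply bounded_by_mul_unit; auto; apply Tame_bounded; auto.
  - apply bounded_by_parity; auto.
  - apply (bounded_by_ext _ a); auto.
Qed.

Lemma Flat_diff G : Flat G -> exists Gx Gy, Flat Gx /\ Flat Gy /\ partials G Gx Gy.
Proof.
  induction 1 as [j k c re Hc Hc0|a b Fa [ax [ay [Fax [Fay Pa]]]] Fb [bx [b_y [Fbx [Fby Pb]]]]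
                 |a b Fa [ax [ay [Fax [Fay Pa]]]] Tb
                 |a b Fa [ax [ay [Fax [Fay Pa]]]] Fb [bx [b_y [Fbx [Fby Pb]]]]
                 |a b _ [ax [ay [Fax [Fay Pa]]]] E].
  - assert (Hc1 : forall n, (n + j - 1 < S k)%nat -> c n * INR (n + j - 1 - k) = 0).
    { intros n Hn; destruct (Nat.lt_ge_cases (n + j - 1) k); [rewrite Hc0; auto; ring|].
      replace (n + j - 1 - k)%nat with 0%nat by lia; simpl; ring. }
    do 2 eexists; split; [|split; [|apply partials_monomial]].
    + apply (Flat_monomial j (S k) (fun n => c n * INR (n + j - 1 - k))); auto.
      apply exp_bounded_mul_INR; auto.
    + destruct re.
      * apply (Flat_monomial j (S k) (fun n => - (c n * INR (n + j - 1 - k)))).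
        -- apply exp_bounded_opp, exp_bounded_mul_INR; auto.
        -- intros; rewrite Hc1; auto; ring.
      * apply (Flat_monomial j (S k) (fun n => c n * INR (n + j - 1 - k))); auto.
        apply exp_bounded_mul_INR; auto.
  - do 2 eexists; split; [|split; [|apply partials_add; eauto]]; apply Flat_add; auto.
  - destruct (Tame_diff b Tb) as [bx [b_y [Tbx [Tby Pb]]]].
    do 2 eexists; split; [|split; [|apply partials_mul; eauto]]; apply Flat_add; apply Flat_mul; auto.
  - do 2 eexists; split; [|split; [|apply partials_parity; eauto]]; apply Flat_parity; auto.
  - exists ax, ay; repeat split; auto; eapply partials_ext; eauto.
Qed.

Lemma represents_derivs g G Gx Gy : represents G g -> partials G Gx Gy ->
  forall x y, D1 x y -> 0 < Rnorm x y -> exists n e, (1 <= n)%nat /\ 0 < e /\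
    forall a b, Rnorm (a - x) (b - y) < e -> near_annulus n a b /\ g a b = G n a b /\
      partial_x g a b = Gx n a b /\ partial_y g a b = Gy n a b /\
      derivable_pt_lim (fun t => g t b) a (Gx n a b) /\ derivable_pt_lim (fun t => g a t) b (Gy n a b).
Proof.
  intros HR HP x y HD Hp; destruct (HR x y HD Hp) as [n [e [Hn [He Hb]]]].
  exists n, e; split; [|split]; auto; intros a b Hab.
  destruct (represents_partials g G Gx Gy n x y e a b HP Hn Hb Hab) as [Da Db].
  destruct (Hb a b Hab).
  split; [|split; [|split; [apply partial_x_eq|split; [apply partial_y_eq|split]]]]; auto.
Qed.

Definition represented_flat (g : R -> R -> R) : Prop :=
  exists G, Flat G /\ g 0 0 = 0 /\ represents G g.

Section Step.

Variables (g : R -> R -> R) (G Gx Gy : family).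
Hypotheses (FG : Flat G) (H0 : g 0 0 = 0) (HR : represents G g)
  (FGx : Flat Gx) (FGy : Flat Gy) (HP : partials G Gx Gy).

Lemma represented_flat_cont x y : D1 x y -> cont2_at g x y.
Proof.
  intro HD; destruct (Req_dec (Rnorm x y) 0) as [E|E].
  { destruct (Rnorm_eq0 _ _ E) as [-> ->]; apply (represents_cont_origin g G); auto.
    apply Flat_bounded; auto. }
  pose proof (Rnorm_nonneg x y).
  destruct (represents_derivs g G Gx Gy HR HP x y HD) as [n [e [Hn [He Hb]]]]; [lra|].
  destruct (Flat_bounded Gx FGx) as [Kx [mx [HKx HBx]]].
  destruct (Flat_bounded Gy FGy) as [Ky [my [HKy HBy]]].
  apply (cont2_at_of_bounded_partials g (partial_x g) (partial_y g) x y e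
           (Kx * 2 ^ (mx * n) * gauss n + Ky * 2 ^ (my * n) * gauss n)); auto.
  intros a b Hab; destruct (Hb a b Hab) as [HE [_ [-> [-> [P1 P2]]]]]; repeat split; auto.
  - pose proof (exp_weight_nonneg Ky (my * n) (gauss n) HKy (Rlt_le _ _ (gauss_pos n))).
    pose proof (HBx n a b Hn HE); lra.
  - pose proof (exp_weight_nonneg Kx (mx * n) (gauss n) HKx (Rlt_le _ _ (gauss_pos n))).
    pose proof (HBy n a b Hn HE); lra.
Qed.

Lemma represented_flat_deriv x y : D1 x y ->
  derivable_pt_lim (fun t => g t y) x (partial_x g x y) /\
  derivable_pt_lim (fun t => g x t) y (partial_y g x y).
Proof.
  intro HD; destruct (Req_dec (Rnorm x y) 0) as [E|E].
  - destruct (Rnorm_eq0 _ _ E) as [-> ->]; assert (HB := Flat_bounded G FG).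
    pose proof (represents_partial_x_origin g G HB HR H0) as Dx.
    pose proof (represents_partial_y_origin g G HB HR H0) as Dy.
    rewrite (partial_x_eq _ _ _ _ Dx), (partial_y_eq _ _ _ _ Dy); auto.
  - pose proof (Rnorm_nonneg x y).
    destruct (represents_derivs g G Gx Gy HR HP x y HD) as [n [e [Hn [He Hb]]]]; [lra|].
    destruct (Hb x y) as [_ [_ [-> [-> [P1 P2]]]]]; [rewrite Rnorm_sub_diag|]; auto.
Qed.

Lemma represented_flat_partial_x : represented_flat (partial_x g).
Proof.
  exists Gx; repeat split; auto.
  - apply partial_x_eq, (represents_partial_x_origin g G); auto; apply Flat_bounded; auto.
  - intros x y HD Hp; destruct (represents_derivs g G Gx Gy HR HP x y HD Hp) as [n [e [Hn [He Hb]]]].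
    exists n, e; split; [|split]; auto; intros a b Hab; destruct (Hb a b Hab) as [? [_ [? _]]]; auto.
Qed.

Lemma represented_flat_partial_y : represented_flat (partial_y g).
Proof.
  exists Gy; repeat split; auto.
  - apply partial_y_eq, (represents_partial_y_origin g G); auto; apply Flat_bounded; auto.
  - intros x y HD Hp; destruct (represents_derivs g G Gx Gy HR HP x y HD Hp) as [n [e [Hn [He Hb]]]].
    exists n, e; split; [|split]; auto; intros a b Hab; destruct (Hb a b Hab) as [? [_ [_ [? _]]]]; auto.
Qed.

End Step.

Lemma represented_flat_Smooth : forall g, represented_flat g -> Smooth g.
Proof.
  cofix CIH; intros g [G [FG [H0 HR]]].
  destruct (Flat_diff G FG) as [Gx [Gy [FGx [FGy HP]]]].
  apply Smooth_intro.
  - intros x y HD; apply (represented_flat_cont g G Gx Gy); auto.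
  - intros x y HD; apply (represented_flat_deriv g G Gx Gy); auto.
  - apply CIH, (represented_flat_partial_x g G Gx Gy); auto.
  - apply CIH, (represented_flat_partial_y g G Gx Gy); auto.
Qed.

Lemma chi_arg_r4 n x y : (Rnorm x y - r4 (S n)) / (r4 n - r4 (S n)) = 2 ^ n * Rnorm x y - 1.
Proof. rewrite r4_S; unfold r4; pose proof (pow2_pos n); field; lra. Qed.

Definition uloc (n : nat) (x y : R) : Cx * Cx := uA (dext 0) r4 p4 F4 n x y.

Definition pcomp (first : bool) (p : Cx * Cx) : Cx := if first then fst p else snd p.

Lemma Tame_chi : Tame (fun n x y => chi (dext 0) r4 n x y).
Proof. apply (Tame_ext _ _ (Tame_cutoff 0)); intros; unfold chi; rewrite chi_arg_r4; auto. Qed.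

Lemma Flat_holomorphic_block re : Flat (fun n x y => cp re (Cscal (F4 n) (Cpow (x, y) (p4 n)))).
Proof.
  apply (Flat_ext _ _ (Flat_monomial 1 0 (fun _ => 1) re (exp_bounded_const 1) (fun n H => ltac:(lia)))).
  intros n x y Hn _; rewrite cp_scal; unfold p4.
  replace (n + 1 - 1)%nat with n by lia; replace (n - 0)%nat with n by lia; ring.
Qed.

Lemma Flat_blended_block re : Flat (fun n x y => cp re (Cadd
   (Cscal (chi (dext 0) r4 n x y * F4 (n - 1)) (Cpow (x, y) (p4 (n - 1))))
   (Cscal ((1 - chi (dext 0) r4 n x y) * F4 (S n)) (Cpow (x, y) (p4 (S n)))))).
Proof.
  assert (T1 : Tame (fun n x y => 1 - chi (dext 0) r4 n x y)).
  { apply (Tame_ext (fun n x y => 1 + -1 * chi (dext 0) r4 n x y));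
      [apply (Tame_add (fun _ _ _ => 1)); [apply Tame_const, exp_bounded_const|apply Tame_scal, Tame_chi]|].
    intros; ring. }
  eapply Flat_ext; [apply Flat_add; apply Flat_mul|].
  - apply (Flat_monomial 0 0 (fun _ => 1) re (exp_bounded_const 1) (fun n H => ltac:(lia))).
  - apply Tame_chi.
  - apply (Flat_monomial 2 0 (fun _ => 1) re (exp_bounded_const 1) (fun n H => ltac:(lia))).
  - exact T1.
  - intros n x y Hn _; cbv beta; rewrite cp_add, !cp_scal; unfold p4.
    replace (n + 0 - 1)%nat with (n - 1)%nat by lia; replace (n + 2 - 1)%nat with (S n) by lia.
    rewrite !Nat.sub_0_r; ring.
Qed.

Lemma Flat_uloc first re : Flat (fun n x y => cp re (pcomp first (uloc n x y))).
Proof.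
  destruct first; eapply Flat_ext;
    [apply (Flat_parity _ _ (Flat_holomorphic_block re) (Flat_blended_block re))| |
     apply (Flat_parity _ _ (Flat_blended_block re) (Flat_holomorphic_block re))|];
    intros; unfold uloc, uA; cbv zeta; destruct (Nat.even n); reflexivity.
Qed.

Lemma uloc_succ m x y : chi (dext 0) r4 m x y = 0 -> chi (dext 0) r4 (S m) x y = 1 ->
  uloc (S m) x y = uloc m x y.
Proof.
  intros H1 H2; unfold uloc, uA; cbv zeta; rewrite H1, H2, Nat.even_succ, <- Nat.negb_even.
  replace (S m - 1)%nat with m by lia; unfold p4.
  destruct (Cpow (x, y) m), (Cpow (x, y) (S m)), (Cpow (x, y) (m - 1)), (Cpow (x, y) (S (S m))).
  destruct (Nat.even m); simpl negb; unfold Cscal, Cadd; cbn [fst snd]; f_equal; f_equal; ring.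
Qed.

Definition holo_block (n : nat) (a b : R) : Cx := Cscal (F4 n) (Cpow (a, b) (p4 n)).

Definition blend_block (n : nat) (a b : R) : Cx :=
  Cadd (Cscal (chi (dext 0) r4 n a b * F4 (n - 1)) (Cpow (a, b) (p4 (n - 1))))
       (Cscal ((1 - chi (dext 0) r4 n a b) * F4 (S n)) (Cpow (a, b) (p4 (S n)))).

Lemma uloc_blocks n a b :
  uloc n a b = if Nat.even n then (holo_block n a b, blend_block n a b)
               else (blend_block n a b, holo_block n a b).
Proof. reflexivity. Qed.

Definition chi_grad (n : nat) (x y : R) : Cx :=
  (dext 1 (2 ^ n * Rnorm x y - 1) * (2 ^ n * (x * / Rnorm x y)),
   dext 1 (2 ^ n * Rnorm x y - 1) * (2 ^ n * (y * / Rnorm x y))).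

(** [d/dz] of the holomorphic block, and [d/dzbar] of the blended block, which only sees the
    gradient of the cutoff. *)
Definition holo_wz (n : nat) (x y : R) : Cx := Cscal (F4 n * INR n) (Cpow (x, y) (n - 1)).

Definition blend_wzbar (n : nat) (x y : R) : Cx :=
  Cscal (1 / 2) (Cmul (chi_grad n x y)
    (Cadd (Cscal (F4 (n - 1)) (Cpow (x, y) (n - 1))) (Cscal (- F4 (S n)) (Cpow (x, y) (S n))))).

Lemma holo_block_wirtinger n x y : exists ax ay,
  has_dx (holo_block n) x y ax /\ has_dy (holo_block n) x y ay /\
  Wz ax ay = holo_wz n x y /\ Wzbar ax ay = C0.
Proof.
  assert (Hc : forall a, derivable_pt_lim (fun _ : R => F4 n) a 0)
    by (intro; apply (derivable_pt_lim_cst_fun _ _ (F4 n)); auto).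
  do 2 eexists; split; [|split; [|split]].
  - apply (has_dx_rscal (fun _ _ => F4 n)); [apply Hc|apply has_dx_Cpow].
  - apply (has_dy_rscal (fun _ _ => F4 n)); [apply Hc|apply has_dy_Cpow].
  - unfold holo_wz, p4; destruct (Cpow (x, y) n), (Cpow (x, y) (n - 1)).
    unfold Wz, Cadd, Cscal, Cmul, Ci; cbn; f_equal; field.
  - unfold p4; destruct (Cpow (x, y) n), (Cpow (x, y) (n - 1)).
    unfold Wzbar, Cadd, Cscal, Cmul, Ci, C0; cbn; f_equal; field.
Qed.

Lemma chi_partials n x y : (1 <= n)%nat -> near_annulus n x y ->
  derivable_pt_lim (fun t => chi (dext 0) r4 n t y) x (fst (chi_grad n x y)) /\
  derivable_pt_lim (fun t => chi (dext 0) r4 n x t) y (snd (chi_grad n x y)).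
Proof.
  intros Hn Hx; destruct (partials_cutoff 0 n x y Hn Hx) as [Dx Dy].
  split; [eapply derivable_pt_lim_ext; [|exact Dx]|eapply derivable_pt_lim_ext; [|exact Dy]];
    intro; unfold chi; rewrite chi_arg_r4; reflexivity.
Qed.

Lemma blend_block_wirtinger n x y : (1 <= n)%nat -> near_annulus n x y -> exists ax ay,
  has_dx (blend_block n) x y ax /\ has_dy (blend_block n) x y ay /\ Wzbar ax ay = blend_wzbar n x y.
Proof.
  intros Hn Hx; destruct (chi_partials n x y Hn Hx) as [Dx Dy].
  assert (Hc : forall c a, derivable_pt_lim (fun _ : R => c) a 0)
    by (intros; apply (derivable_pt_lim_cst_fun _ _ c); auto).
  do 2 eexists; split; [|split].
  - apply has_dx_add; apply has_dx_rscal; try apply has_dx_Cpow.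
    + apply (derivable_pt_lim_mult (fun t => chi (dext 0) r4 n t y) (fun _ => F4 (n - 1)));
        [exact Dx|apply Hc].
    + apply (derivable_pt_lim_mult (fun t => 1 - chi (dext 0) r4 n t y) (fun _ => F4 (S n)));
        [|apply Hc].
      apply (derivable_pt_lim_minus (fun _ => 1) (fun t => chi (dext 0) r4 n t y)); [apply Hc|exact Dx].
  - apply has_dy_add; apply has_dy_rscal; try apply has_dy_Cpow.
    + apply (derivable_pt_lim_mult (fun t => chi (dext 0) r4 n x t) (fun _ => F4 (n - 1)));
        [exact Dy|apply Hc].
    + apply (derivable_pt_lim_mult (fun t => 1 - chi (dext 0) r4 n x t) (fun _ => F4 (S n)));
        [|apply Hc].
      apply (derivable_pt_lim_minus (fun _ => 1) (fun t => chi (dext 0) r4 n x t)); [apply Hc|exact Dy].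
  - unfold blend_wzbar, chi_grad, p4.
    destruct (Cpow (x, y) (n - 1)), (Cpow (x, y) (S n)), (Cpow (x, y) (n - 1 - 1)), (Cpow (x, y) (S n - 1)).
    unfold Wzbar, Cadd, Cscal, Cmul, Ci; cbn; f_equal; ring.
Qed.

Lemma norm_chi_grad n x y : 0 < Rnorm x y ->
  sqrt (Cnorm2 (chi_grad n x y)) = Rabs (dext 1 (2 ^ n * Rnorm x y - 1)) * 2 ^ n.
Proof.
  intro Hp; set (g := dext 1 (2 ^ n * Rnorm x y - 1)); pose proof (pow2_pos n).
  assert (Hs : 0 < x ^ 2 + y ^ 2) by (rewrite <- Rnorm_sqr; nra).
  unfold Cnorm2, chi_grad; fold g; cbn [fst snd].
  replace ((g * (2 ^ n * (x * / Rnorm x y))) ^ 2 + (g * (2 ^ n * (y * / Rnorm x y))) ^ 2)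
    with ((g * 2 ^ n) ^ 2 * ((x ^ 2 + y ^ 2) / (Rnorm x y * Rnorm x y))) by (field; lra).
  rewrite Rnorm_sqr; replace ((x ^ 2 + y ^ 2) / (x ^ 2 + y ^ 2)) with 1 by (field; lra).
  rewrite Rmult_1_r, <- pow2_abs, sqrt_pow2 by apply Rabs_pos.
  rewrite Rabs_mult, (Rabs_right (2 ^ n)); lra.
Qed.

Lemma norm_holo_wz n x y : sqrt (Cnorm2 (holo_wz n x y)) = F4 n * INR n * Rnorm x y ^ (n - 1).
Proof.
  unfold holo_wz; rewrite sqrt_Cnorm2_scal, sqrt_Cnorm2_pow, Rabs_right; auto.
  pose proof (F4_pos n); pose proof (pos_INR n); apply Rle_ge, Rmult_le_pos; lra.
Qed.

(** [2^n F(n - 1) = sqrt 2 F(n)] and [2^n F(n + 1) |z|^2 <= (25/4) sqrt 2 F(n)] on the annulus: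
    the gradient [~ 2^n] of the cutoff is exactly compensated by the neighbouring blocks. *)
Lemma norm_blend_wzbar_le n x y M1 : (1 <= n)%nat -> near_annulus n x y ->
  Rabs (dext 1 (2 ^ n * Rnorm x y - 1)) <= M1 ->
  sqrt (Cnorm2 (blend_wzbar n x y)) <= 29 / 4 * M1 * F4 n * Rnorm x y ^ (n - 1).
Proof.
  intros Hn HE Hg; pose proof (near_annulus_pos n x y HE) as Hp; set (N := Rnorm x y) in *.
  pose proof (F4_pos (n - 1)); pose proof (F4_pos n); pose proof (F4_pos (S n)); pose proof (pow2_pos n).
  assert (HNn : 0 < N ^ (n - 1)) by (apply pow_lt; auto).
  pose proof (Rabs_pos (dext 1 (2 ^ n * N - 1))).
  assert (Htri : sqrt (Cnorm2 (Cadd (Cscal (F4 (n - 1)) (Cpow (x, y) (n - 1)))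
                                    (Cscal (- F4 (S n)) (Cpow (x, y) (S n)))))
                 <= F4 (n - 1) * N ^ (n - 1) + F4 (S n) * N ^ S n).
  { eapply Rle_trans; [apply sqrt_Cnorm2_add|].
    rewrite !sqrt_Cnorm2_scal, !sqrt_Cnorm2_pow, Rabs_Ropp, !Rabs_right by lra; fold N; lra. }
  assert (HN2 : 2 ^ n * F4 (S n) * N ^ 2 <= 25 / 4 * (F4 n * Rpower 2 (1 / 2))).
  { rewrite <- F4_succ; destruct HE as [_ Hhi]; fold N in Hhi.
    assert (N ^ 2 <= (5 / 2 / 2 ^ n) ^ 2) by (apply pow_incr; lra).
    replace (25 / 4 * (F4 (S n) / 2 ^ n)) with (2 ^ n * F4 (S n) * (5 / 2 / 2 ^ n) ^ 2) by (field; lra).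
    apply Rmult_le_compat_l; nra. }
  assert (HNs : N ^ S n = N ^ (n - 1) * N ^ 2) by (rewrite <- pow_add; f_equal; lia).
  pose proof Rpower2_half_le; pose proof (F4_pred n Hn).
  unfold blend_wzbar.
  rewrite sqrt_Cnorm2_scal, sqrt_Cnorm2_mul, (norm_chi_grad n x y Hp), Rabs_right by lra.
  fold N.
  apply (Rle_trans _ (1 / 2 * (M1 * 2 ^ n * (F4 (n - 1) * N ^ (n - 1) + F4 (S n) * N ^ S n)))).
  - apply Rmult_le_compat_l; [lra|]; apply Rmult_le_compat; [nra|apply sqrt_pos|nra|exact Htri].
  - rewrite HNs.
    replace (1 / 2 * (M1 * 2 ^ n * (F4 (n - 1) * N ^ (n - 1) + F4 (S n) * (N ^ (n - 1) * N ^ 2))))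
      with (1 / 2 * M1 * N ^ (n - 1) * (2 ^ n * F4 (n - 1) + 2 ^ n * F4 (S n) * N ^ 2)) by ring.
    replace (29 / 4 * M1 * F4 n * N ^ (n - 1)) with (1 / 2 * M1 * N ^ (n - 1) * (29 / 2 * F4 n)) by field.
    assert (0 <= M1) by lra; apply Rmult_le_compat_l; nra.
Qed.

Lemma wirtinger_ratio_le n x y M1 Mz : (1 <= n)%nat -> near_annulus n x y -> Rnorm x y < 1 ->
  Rabs (dext 1 (2 ^ n * Rnorm x y - 1)) <= M1 ->
  C2norm C0 (blend_wzbar n x y) / C2norm (holo_wz n x y) Mz <= (16 * M1 + 1) / (- (ln (Rnorm x y) / ln 2)).
Proof.
  intros Hn HE HD Hg; pose proof (near_annulus_pos n x y HE) as Hp.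
  pose proof (norm_blend_wzbar_le n x y M1 Hn HE Hg) as HA.
  pose proof (Rabs_pos (dext 1 (2 ^ n * Rnorm x y - 1))).
  set (N := Rnorm x y) in *; set (B := F4 n * INR n * N ^ (n - 1)).
  assert (Hnr : 1 <= INR n) by (apply (le_INR 1); lia).
  assert (HB : 0 < B) by (pose proof (F4_pos n); pose proof (pow_lt N (n - 1) Hp); unfold B;
                          apply Rmult_lt_0_compat; [nra|auto]).
  assert (Hden : B <= C2norm (holo_wz n x y) Mz).
  { unfold C2norm, B, N; rewrite <- norm_holo_wz; apply sqrt_le_1_alt.
    pose proof (Cnorm2_nonneg Mz); lra. }
  assert (Hnum : C2norm C0 (blend_wzbar n x y) = sqrt (Cnorm2 (blend_wzbar n x y)))
    by (unfold C2norm, Cnorm2, C0; cbn [fst snd]; f_equal; ring).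
  destruct (neg_log2_bounds n N) as [HL1 HL2]; [destruct HE; auto|auto|].
  set (L := - (ln N / ln 2)) in *.
  apply (Rle_trans _ (29 / 4 * M1 * F4 n * N ^ (n - 1) / B)).
  - rewrite Hnum; unfold Rdiv; apply Rmult_le_compat; auto.
    + apply sqrt_pos.
    + left; apply Rinv_0_lt_compat; lra.
    + apply Rinv_le_contravar; auto.
  - replace (29 / 4 * M1 * F4 n * N ^ (n - 1) / B) with (29 / 4 * M1 / INR n)
      by (unfold B; pose proof (F4_pos n); pose proof (pow_lt N (n - 1) Hp); field; lra).
    apply (Rmult_le_reg_r (INR n * L)); [nra|].
    replace (29 / 4 * M1 / INR n * (INR n * L)) with (29 / 4 * M1 * L) by (field; lra).
    replace ((16 * M1 + 1) / L * (INR n * L)) with ((16 * M1 + 1) * INR n) by (field; lra).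
    nra.
Qed.
Section Map.

Variable u : R -> R -> Cx * Cx.
Hypothesis u_GC : GC_map (d 0%nat) r4 p4 F4 u.

Lemma u_eq_uloc n a b : (1 <= n)%nat -> r4 (S n) <= Rnorm a b <= r4 n -> u a b = uloc n a b.
Proof.
  intros Hn [H1 H2]; destruct u_GC as [_ HG]; rewrite (HG n a b Hn (conj H1 H2)).
  unfold uloc, uA, chi; cbv zeta; rewrite !chi_arg_r4, dext0_unit; auto.
  rewrite r4_S in H1; unfold r4 in H2; pose proof (pow2_pos n).
  apply (Rmult_le_compat_l (2 ^ n)) in H1; apply (Rmult_le_compat_l (2 ^ n)) in H2; try lra.
  replace (2 ^ n * (1 / 2 ^ n)) with 1 in H1 by (field; lra).
  replace (2 ^ n * (2 / 2 ^ n)) with 2 in H2 by (field; lra); lra.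
Qed.

Lemma u_represents_interior x y n : (1 <= n)%nat -> r4 (S n) < Rnorm x y < r4 n ->
  exists e, 0 < e /\
    forall a b, Rnorm (a - x) (b - y) < e -> near_annulus n a b /\ u a b = uloc n a b.
Proof.
  intros Hn [H1 H2].
  pose proof (Rmin_l (Rnorm x y - r4 (S n)) (r4 n - Rnorm x y)).
  pose proof (Rmin_r (Rnorm x y - r4 (S n)) (r4 n - Rnorm x y)).
  exists (Rmin (Rnorm x y - r4 (S n)) (r4 n - Rnorm x y)); split; [apply Rmin_pos; lra|].
  intros a b Hab; pose proof (Rnorm_Rabs_sub x y a b) as Hd.
  assert (Habs : Rabs (Rnorm a b - Rnorm x y) < Rmin (Rnorm x y - r4 (S n)) (r4 n - Rnorm x y))
    by lra; apply Rabs_def2 in Habs.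
  split; [|apply u_eq_uloc; auto; lra].
  rewrite r4_S in *; unfold r4 in *; pose proof (pow2_pos n); split.
  - apply (Rlt_trans _ (1 / 2 ^ n)); [unfold Rdiv; apply Rmult_lt_compat_r;
      [apply Rinv_0_lt_compat|]|]; lra.
  - apply (Rlt_trans _ (2 / 2 ^ n)); [lra|unfold Rdiv; apply Rmult_lt_compat_r;
      [apply Rinv_0_lt_compat|]; lra].
Qed.

(** On a circle [|z| = 2^-m] the formulas [m] and [m + 1] agree on a whole neighbourhood. *)
Lemma u_represents_circle x y m : (1 <= m)%nat -> Rnorm x y = 1 / 2 ^ m ->
  exists e, 0 < e /\
    forall a b, Rnorm (a - x) (b - y) < e -> near_annulus m a b /\ u a b = uloc m a b.
Proof.
  intros Hm HN; pose proof (pow2_pos m).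
  exists (1 / (8 * 2 ^ m)); split; [apply Rdiv_lt_0_compat; lra|]; intros a b Hab.
  pose proof (Rnorm_Rabs_sub x y a b).
  assert (Hr : Rabs (Rnorm a b - Rnorm x y) < 1 / (8 * 2 ^ m)) by lra.
  apply Rabs_def2 in Hr; rewrite HN in Hr.
  assert (Hlo : 7 / 8 < 2 ^ m * Rnorm a b).
  { replace (7 / 8) with (2 ^ m * (1 / 2 ^ m - 1 / (8 * 2 ^ m))) by (field; lra).
    apply Rmult_lt_compat_l; lra. }
  assert (Hhi : 2 ^ m * Rnorm a b < 9 / 8).
  { replace (9 / 8) with (2 ^ m * (1 / 2 ^ m + 1 / (8 * 2 ^ m))) by (field; lra).
    apply Rmult_lt_compat_l; lra. }
  split.
  { split; [apply (Rmult_lt_reg_l (2 ^ m))|apply (Rmult_lt_reg_l (2 ^ m))]; auto;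
      replace (2 ^ m * (3 / 4 / 2 ^ m)) with (3 / 4) by (field; lra);
      replace (2 ^ m * (5 / 2 / 2 ^ m)) with (5 / 2) by (field; lra); lra. }
  assert (Hr4 : forall k c, 1 <= 2 ^ k * c <= 2 -> r4 (S k) <= c <= r4 k).
  { intros k c [Hl Hu]; rewrite r4_S; unfold r4; pose proof (pow2_pos k).
    split; apply (Rmult_le_reg_l (2 ^ k)); auto.
    - replace (2 ^ k * (1 / 2 ^ k)) with 1 by (field; lra); lra.
    - replace (2 ^ k * (2 / 2 ^ k)) with 2 by (field; lra); lra. }
  destruct (Rle_lt_dec 1 (2 ^ m * Rnorm a b)) as [Hc|Hc].
  - apply u_eq_uloc, Hr4; auto; lra.
  - rewrite (u_eq_uloc (S m)); [|lia|apply Hr4; simpl; lra].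
    apply uloc_succ; unfold chi; rewrite chi_arg_r4; [apply dext_low|apply dext_high]; simpl; lra.
Qed.

Lemma u_represents : forall x y, D1 x y -> 0 < Rnorm x y -> exists n e, (1 <= n)%nat /\ 0 < e /\
  forall a b, Rnorm (a - x) (b - y) < e -> near_annulus n a b /\ u a b = uloc n a b.
Proof.
  intros x y HD Hp; unfold D1 in HD.
  destruct (r4_annulus_index (Rnorm x y)) as [n [Hn [H1 [H2|H2]]]]; [lra| |].
  - destruct (u_represents_interior x y n) as [e [He Hb]]; auto; exists n, e; split; [|split]; auto.
  - destruct n as [|[|m]]; [lia|unfold r4 in H2; simpl in H2; lra|].
    destruct (u_represents_circle x y (S m)) as [e [He Hb]]; [lia|rewrite H2, r4_S; reflexivity|].
    exists (S m), e; split; [lia|split]; auto.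
Qed.

Lemma u_component_represented first re :
  represented_flat (fun x y => cp re (pcomp first (u x y))).
Proof.
  exists (fun n x y => cp re (pcomp first (uloc n x y))); split; [apply Flat_uloc|split].
  - destruct u_GC as [-> _]; destruct first, re; reflexivity.
  - intros x y HD Hp; destruct (u_represents x y HD Hp) as [n [e [Hn [He Hb]]]].
    exists n, e; split; [|split]; auto; intros a b Hab; destruct (Hb a b Hab) as [? ->]; auto.
Qed.

Lemma u_smooth : smooth_map D1 u.
Proof.
  repeat split; apply Smooth_smooth2, represented_flat_Smooth;
    [apply (u_component_represented true true)|apply (u_component_represented true false)
    |apply (u_component_represented false true)|apply (u_component_represented false false)].
Qed.

Lemma u_vanishes : vanishes_inf_order u.
Proof.
  intros k eps He.
  assert (Hsmall : forall first re, exists del, 0 < del /\ forall x y, D1 x y -> 0 < Rnorm x y < del ->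
            Rabs (cp re (pcomp first (u x y))) <= eps / 8 * Rnorm x y ^ k).
  { intros first re; destruct (u_component_represented first re) as [G [FG [_ HR]]].
    apply (represents_small _ G); auto; [apply Flat_bounded; auto|lra]. }
  destruct (Hsmall true true) as [d1 [Hd1 S1]]; destruct (Hsmall true false) as [d2 [Hd2 S2]].
  destruct (Hsmall false true) as [d3 [Hd3 S3]]; destruct (Hsmall false false) as [d4 [Hd4 S4]].
  exists (Rmin (Rmin d1 d2) (Rmin d3 d4)); split; [repeat apply Rmin_pos; auto|].
  intros x y HD [Hp Hl].
  pose proof (Rmin_l (Rmin d1 d2) (Rmin d3 d4)); pose proof (Rmin_r (Rmin d1 d2) (Rmin d3 d4)).
  pose proof (Rmin_l d1 d2); pose proof (Rmin_r d1 d2).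
  pose proof (Rmin_l d3 d4); pose proof (Rmin_r d3 d4).
  specialize (S1 x y HD ltac:(lra)); specialize (S2 x y HD ltac:(lra)).
  specialize (S3 x y HD ltac:(lra)); specialize (S4 x y HD ltac:(lra)); cbn in S1, S2, S3, S4.
  pose proof (C2norm_le_Rabs (fst (u x y)) (snd (u x y))).
  assert (Hk : 0 < Rnorm x y ^ k) by (apply pow_lt; auto).
  apply (Rmult_lt_reg_r (Rnorm x y ^ k)); auto; unfold Rdiv; rewrite Rmult_assoc, Rinv_l by lra; nra.
Qed.

Lemma u_wirtinger x y a1x a1y a2x a2y : D1 x y -> 0 < Rnorm x y ->
  has_dx (u1 u) x y a1x -> has_dy (u1 u) x y a1y -> has_dx (u2 u) x y a2x -> has_dy (u2 u) x y a2y ->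
  exists n Mz, (1 <= n)%nat /\ near_annulus n x y /\
    ((Wz a1x a1y, Wzbar a1x a1y), (Wz a2x a2y, Wzbar a2x a2y)) =
    (if Nat.even n then ((holo_wz n x y, C0), (Mz, blend_wzbar n x y))
     else ((Mz, blend_wzbar n x y), (holo_wz n x y, C0))).
Proof.
  intros HD Hp H1x H1y H2x H2y; destruct (u_represents x y HD Hp) as [n [e [Hn [He Hb]]]].
  assert (HE : near_annulus n x y) by (apply Hb; rewrite Rnorm_sub_diag; auto).
  destruct (holo_block_wirtinger n x y) as [hx [hy [Hhx [Hhy [Hhz Hhzb]]]]].
  destruct (blend_block_wirtinger n x y Hn HE) as [bx [b_y [Hbx [Hby Hbzb]]]].
  assert (E1 : forall a b, Rnorm (a - x) (b - y) < e ->
            u1 u a b = if Nat.even n then holo_block n a b else blend_block n a b).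
  { intros a b Hab; unfold u1; rewrite (proj2 (Hb a b Hab)), uloc_blocks; destruct (Nat.even n); auto. }
  assert (E2 : forall a b, Rnorm (a - x) (b - y) < e ->
            u2 u a b = if Nat.even n then blend_block n a b else holo_block n a b).
  { intros a b Hab; unfold u2; rewrite (proj2 (Hb a b Hab)), uloc_blocks; destruct (Nat.even n); auto. }
  exists n, (Wz bx b_y); split; [|split]; auto; rewrite <- Hhz, <- Hhzb, <- Hbzb.
  destruct (Nat.even n).
  - destruct (has_partials_unique_ball _ _ x y e _ _ _ _ He E1 H1x H1y Hhx Hhy) as [-> ->].
    destruct (has_partials_unique_ball _ _ x y e _ _ _ _ He E2 H2x H2y Hbx Hby) as [-> ->]; auto.
  - destruct (has_partials_unique_ball _ _ x y e _ _ _ _ He E1 H1x H1y Hbx Hby) as [-> ->].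
    destruct (has_partials_unique_ball _ _ x y e _ _ _ _ He E2 H2x H2y Hhx Hhy) as [-> ->]; auto.
Qed.

Lemma holo_wz_neq0 n x y : (1 <= n)%nat -> 0 < Rnorm x y -> holo_wz n x y <> C0.
Proof.
  intros Hn Hp E; apply (f_equal (fun z => sqrt (Cnorm2 z))) in E.
  rewrite norm_holo_wz in E; unfold Cnorm2, C0 in E; cbn [fst snd] in E.
  replace (0 ^ 2 + 0 ^ 2) with 0 in E by ring; rewrite sqrt_0 in E.
  pose proof (F4_pos n); pose proof (pow_lt _ (n - 1) Hp).
  assert (1 <= INR n) by (apply (le_INR 1); lia).
  assert (0 < F4 n * INR n * Rnorm x y ^ (n - 1)) by (apply Rmult_lt_0_compat; nra); lra.
Qed.

Lemma u_Wz_neq0 x y a1x a1y a2x a2y : D1 x y -> 0 < Rnorm x y ->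
  has_dx (u1 u) x y a1x -> has_dy (u1 u) x y a1y -> has_dx (u2 u) x y a2x -> has_dy (u2 u) x y a2y ->
  (Wz a1x a1y, Wz a2x a2y) <> (C0, C0).
Proof.
  intros HD Hp H1x H1y H2x H2y.
  destruct (u_wirtinger x y a1x a1y a2x a2y) as [n [Mz [Hn [_ E]]]]; auto.
  pose proof (holo_wz_neq0 n x y Hn Hp); destruct (Nat.even n); injection E; intros; congruence.
Qed.

Lemma u_wirtinger_ratio : exists C1, 0 < C1 /\
  forall (x y : R) (a1x a1y a2x a2y : Cx), D1 x y -> 0 < Rnorm x y ->
    has_dx (u1 u) x y a1x -> has_dy (u1 u) x y a1y -> has_dx (u2 u) x y a2x -> has_dy (u2 u) x y a2y ->
    C2norm (Wzbar a1x a1y) (Wzbar a2x a2y) / C2norm (Wz a1x a1y) (Wz a2x a2y)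
      <= C1 / (- (ln (Rnorm x y) / ln 2)).
Proof.
  destruct (dext_bounded 1) as [M1 [HM1 HMb]]; exists (16 * M1 + 1); split; [lra|].
  intros x y a1x a1y a2x a2y HD Hp H1x H1y H2x H2y.
  destruct (u_wirtinger x y a1x a1y a2x a2y) as [n [Mz [Hn [HE E]]]]; auto.
  pose proof (f_equal (fun p => fst (fst p)) E) as Ez1; pose proof (f_equal (fun p => snd (fst p)) E) as Eb1.
  pose proof (f_equal (fun p => fst (snd p)) E) as Ez2; pose proof (f_equal (fun p => snd (snd p)) E) as Eb2.
  destruct (Nat.even n); cbn [fst snd] in Ez1, Eb1, Ez2, Eb2; rewrite Ez1, Eb1, Ez2, Eb2.
  - apply wirtinger_ratio_le; auto.
  - rewrite (C2norm_comm (blend_wzbar n x y)), (C2norm_comm Mz); apply wirtinger_ratio_le; auto.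
Qed.

End Map.

End Construction.

Theorem mainTheorem4 (s : R -> R) (u : R -> R -> Cx * Cx) :
  cutoff s ->
  GC_map s r4 p4 F4 u ->
  smooth_map D1 u /\
  vanishes_inf_order u /\
  (forall (x y : R) (a1x a1y a2x a2y : Cx),
     D1 x y -> 0 < Rnorm x y ->
     has_dx (u1 u) x y a1x -> has_dy (u1 u) x y a1y ->
     has_dx (u2 u) x y a2x -> has_dy (u2 u) x y a2y ->
     (Wz a1x a1y, Wz a2x a2y) <> (C0, C0)) /\
  (exists C1 : R, 0 < C1 /\
     forall (x y : R) (a1x a1y a2x a2y : Cx),
       D1 x y -> 0 < Rnorm x y ->
       has_dx (u1 u) x y a1x -> has_dy (u1 u) x y a1y ->
       has_dx (u2 u) x y a2x -> has_dy (u2 u) x y a2y ->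
       C2norm (Wzbar a1x a1y) (Wzbar a2x a2y) / C2norm (Wz a1x a1y) (Wz a2x a2y)
         <= C1 / (- (ln (Rnorm x y) / ln 2))).
Proof.
  intros [d [<- [Hd [Hlow [_ [_ [_ [_ Hhigh]]]]]]]] HG.
  split; [|split; [|split]].
  - exact (u_smooth d Hd Hlow Hhigh u HG).
  - exact (u_vanishes d Hd Hlow Hhigh u HG).
  - exact (u_Wz_neq0 d Hd Hlow Hhigh u HG).
  - exact (u_wirtinger_ratio d Hd Hlow Hhigh u HG).
Qed.
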